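(* Let $k\in\mathbb{Z}$ and $z\in\mathbb{C}$ with $|z|\ge \left(\tfrac12+(2|k|+1)\pi\right)e^{-1/2}$ (in particular, this holds whenever $|z|\ge 4(|k|+1)$). Then $|W_k'(z)|\le \frac{1}{|z|}$.
   Context: $W_k$ denotes the $k$-th branch of the Lambert $W$ function (inverse of $w\mapsto we^w$) in the standard convention of Corless, Gonnet, Hare, Jeffrey and Knuth (1996). On a branch cut, values are defined by continuity from the upper half plane and $W_k'$ denotes the derivative of the fixed branch $W_k$ (directional derivative along the cut there). *)

From Stdlib Require Import Reals ZArith ClassicalEpsilon.
From Coquelicot Require Import Coquelicot.
Open Scope R_scope.

Definition cexp (w : C) : C :=
  (exp (Re w) * cos (Im w), exp (Re w) * sin (Im w)).

(** x-coordinate of the boundary curves  x = - y cot y  of the branch ranges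
    (Corless, Gonnet, Hare, Jeffrey, Knuth 1996). *)
Definition lw_phi (y : R) : R := - y * cos y / sin y.

(** Range of the k-th branch W_k of Lambert W, in the standard convention
    of Corless et al. (1996), including the boundary pieces selected by
    "continuity from the upper half plane" (counter-clockwise continuity)
    on the branch cuts. *)
Definition lw_branch (k : Z) (w : C) : Prop :=
  let x := Re w in
  let y := Im w in
  let kr := IZR k in
  if (k =? 0)%Z then
    (- PI < y < 0 /\ lw_phi y < x) \/
    (y = 0 /\ -1 <= x) \/
    (0 < y < PI /\ lw_phi y <= x)
  else if (0 <? k)%Z then
    (2 * (kr - 1) * PI < y < (2 * kr - 1) * PI /\ x < lw_phi y) \/
    ((2 * kr - 1) * PI <= y <= 2 * kr * PI) \/
    (2 * kr * PI < y < (2 * kr + 1) * PI /\ lw_phi y <= x)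
  else
    (k = (-1)%Z /\ y = 0 /\ x < -1) \/
    ((2 * kr + 1) * PI < y < (2 * kr + 2) * PI /\ x <= lw_phi y) \/
    (2 * kr * PI <= y <= (2 * kr + 1) * PI) \/
    ((2 * kr - 1) * PI < y < 2 * kr * PI /\ lw_phi y < x).

(** W_k(z): the (unique) solution w of w e^w = z lying in the range of
    branch k.  (Chosen by Hilbert's epsilon; where no such w exists,
    i.e. z = 0 with k <> 0, or z = -1/e with k = -1, the value is
    irrelevant for the theorem.) *)
Definition LambertW (k : Z) (z : C) : C :=
  epsilon (inhabits (0%R, 0%R))
    (fun w : C => lw_branch k w /\ Cmult w (cexp w) = z).

Definition lw_on_cut (k : Z) (z : C) : Prop :=
  Im z = 0 /\
  (if (k =? 0)%Z then Re z <= - exp (-1) else Re z <= 0).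

(** Off the branch cut this is the complex derivative; on the cut it is the
    directional derivative along the cut (the real direction). *)
Definition lw_deriv (k : Z) (z d : C) : Prop :=
  if excluded_middle_informative (lw_on_cut k z) then
    is_derive (fun h : R => LambertW k (Cplus z (RtoC h))) 0 d
  else
    is_derive (LambertW k) z d.

(* Write [z = e^(L + i T)] with [T] in the window [((2k-1) PI, (2k+1) PI]] of branch [k],
   and a candidate [w = e^(a + i b)] with [-PI < b <= PI].  The range of [W_k] is exactly
   the set of [w] whose angle sum [b + Im w] lies in that window, so [w e^w = z] turns
   into the real system [a + e^a cos b = L], [b + e^a sin b = T].  For [L > -1] it has a
   unique solution, depending continuously on [(L, T)]; hence [W_k] is continuous, and
   inverting the expansion of [w e^w] at [W], whose derivative [e^W (1 + W)] does not
   vanish, gives [W_k' = 1 / (e^W (1 + W))], along the cut as well.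
   For the bound, [|W| e^(Re W) = |z|] and [|Im W| <= |T| <= (2|k|+1) PI].  If
   [Re W < -1/2] this would force [|z| < (1/2 + (2|k|+1) PI) e^(-1/2)]; so
   [Re W >= -1/2], hence [|1 + W| >= |W|] and [|W_k'| <= 1 / (e^(Re W) |W|) = 1 / |z|]. *)

From Stdlib Require Import Reals ZArith Lra Lia ClassicalEpsilon.
From Coquelicot Require Import Coquelicot.
Open Scope R_scope.

Lemma ex_derive_continuous_R (f : R -> R) x : ex_derive f x -> continuous f x.
Proof. apply (@ex_derive_continuous R_AbsRing R_NormedModule). Qed.

Lemma continuity_pt_of_ex_derive (f : R -> R) x : ex_derive f x -> continuity_pt f x.
Proof. intros H. apply continuity_pt_filterlim. exact (ex_derive_continuous_R f x H). Qed.

Lemma filterlim_Rabs_lt {X} (F : (X -> Prop) -> Prop) {FF : Filter F} (f : X -> R) y eps :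
  filterlim f F (locally y) -> 0 < eps -> F (fun t => Rabs (f t - y) < eps).
Proof. intros Hf Heps. exact (proj1 (filterlim_locally f y) Hf (mkposreal eps Heps)). Qed.

Section FilterLimits.

Context {X : Type} (F : (X -> Prop) -> Prop) {FF : Filter F}.

Lemma filterlim_of_Rabs_lt (f : X -> R) y :
  (forall eps, 0 < eps -> F (fun t => Rabs (f t - y) < eps)) -> filterlim f F (locally y).
Proof.
  intros H. apply (proj2 (filterlim_locally f y)). intros [eps He]. exact (H eps He).
Qed.

Lemma filterlim_Rplus (f g : X -> R) a b : filterlim f F (locally a) ->
  filterlim g F (locally b) -> filterlim (fun t => f t + g t) F (locally (a + b)).
Proof. intros Hf Hg. exact (filterlim_comp_2 f g Rplus Hf Hg (filterlim_plus a b)). Qed.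

Lemma filterlim_Rmult (f g : X -> R) a b : filterlim f F (locally a) ->
  filterlim g F (locally b) -> filterlim (fun t => f t * g t) F (locally (a * b)).
Proof. intros Hf Hg. exact (filterlim_comp_2 f g Rmult Hf Hg (filterlim_mult a b)). Qed.

Lemma filterlim_Ropp (f : X -> R) a :
  filterlim f F (locally a) -> filterlim (fun t => - f t) F (locally (- a)).
Proof. intros Hf. exact (filterlim_comp _ _ _ f Ropp F _ _ Hf (filterlim_opp a)). Qed.

Lemma filterlim_continuous (f : X -> R) (h : R -> R) a :
  filterlim f F (locally a) -> continuous h a -> filterlim (fun t => h (f t)) F (locally (h a)).
Proof. intros Hf Hh. exact (filterlim_comp _ _ _ f h F _ _ Hf Hh). Qed.

Lemma filterlim_eventually_gt (f : X -> R) y c :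
  c < y -> filterlim f F (locally y) -> F (fun t => c < f t).
Proof.
  intros Hc Hf. apply (filter_imp (fun t => Rabs (f t - y) < y - c)).
  - intros t Ht. apply Rabs_def2 in Ht. lra.
  - apply (filterlim_Rabs_lt F); [exact Hf | lra].
Qed.

End FilterLimits.

Lemma lt_of_increasing_on (h : R -> R) lo hi s t :
  (forall u v, lo < u -> u < v -> v < hi -> h u < h v) ->
  lo < s < hi -> lo < t < hi -> h s < h t -> s < t.
Proof.
  intros Hh Hs Ht Hst. destruct (Rtotal_order s t) as [| [-> | Hts]]; [assumption | lra |].
  pose proof (Hh t s ltac:(lra) Hts ltac:(lra)). lra.
Qed.

Lemma mul_exp_lt_compat u v : 0 <= u -> u < v -> u * exp u < v * exp v.
Proof.
  intros Hu Huv. pose proof (exp_increasing _ _ Huv). pose proof (exp_pos u). nra.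
Qed.

Lemma mul_exp_between x x0 e : 0 < x -> 0 < e < x0 ->
  (x0 - e) * exp (x0 - e) < x * exp x < (x0 + e) * exp (x0 + e) -> Rabs (x - x0) < e.
Proof.
  intros Hx He [Hlo Hhi].
  assert (Hincr : forall u v, 0 < u -> u < v -> v < x + x0 + e + 1 -> u * exp u < v * exp v)
    by (intros u v Hu Huv _; apply mul_exp_lt_compat; lra).
  apply Rabs_def1.
  - enough (x < x0 + e) by lra.
    apply (lt_of_increasing_on (fun u => u * exp u) 0 (x + x0 + e + 1));
      [exact Hincr | lra | lra | exact Hhi].
  - enough (x0 - e < x) by lra.
    apply (lt_of_increasing_on (fun u => u * exp u) 0 (x + x0 + e + 1));
      [exact Hincr | lra | lra | exact Hlo].
Qed.

Lemma neg_mul_exp_lt x : x < -1 -> - x * exp x < exp (-1).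
Proof.
  intros Hx. pose proof (exp_ineq1 (- x - 1) ltac:(lra)). pose proof (exp_pos x).
  replace (exp (-1)) with (exp (- x - 1) * exp x) by (rewrite <- exp_plus; f_equal; ring).
  nra.
Qed.

Lemma ln_gt_m1 r : exp (-1) < r -> -1 < ln r.
Proof.
  intros Hr. rewrite <- (ln_exp (-1)). apply ln_increasing; [apply exp_pos | exact Hr].
Qed.

Lemma sin_period_Z x m : sin (x + 2 * IZR m * PI) = sin x.
Proof.
  destruct (Z_le_gt_dec 0 m) as [Hm | Hm].
  - rewrite <- (Z2Nat.id m), <- INR_IZR_INZ by lia. apply sin_period.
  - rewrite <- (sin_period (x + 2 * IZR m * PI) (Z.to_nat (- m))).
    rewrite INR_IZR_INZ, Z2Nat.id, opp_IZR by lia. f_equal. ring.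
Qed.

Lemma cos_period_Z x m : cos (x + 2 * IZR m * PI) = cos x.
Proof.
  destruct (Z_le_gt_dec 0 m) as [Hm | Hm].
  - rewrite <- (Z2Nat.id m), <- INR_IZR_INZ by lia. apply cos_period.
  - rewrite <- (cos_period (x + 2 * IZR m * PI) (Z.to_nat (- m))).
    rewrite INR_IZR_INZ, Z2Nat.id, opp_IZR by lia. f_equal. ring.
Qed.

Lemma sin_pos_Z (m : Z) u : 2 * IZR m * PI < u < (2 * IZR m + 1) * PI -> 0 < sin u.
Proof.
  intros Hu. replace u with (u - 2 * IZR m * PI + 2 * IZR m * PI) by ring.
  rewrite sin_period_Z. apply sin_gt_0; lra.
Qed.

Lemma sin_nonneg_Z (m : Z) u : 2 * IZR m * PI <= u <= (2 * IZR m + 1) * PI -> 0 <= sin u.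
Proof.
  intros Hu. replace u with (u - 2 * IZR m * PI + 2 * IZR m * PI) by ring.
  rewrite sin_period_Z. apply sin_ge_0; lra.
Qed.

Lemma sin_neg_Z (m : Z) u : (2 * IZR m - 1) * PI < u < 2 * IZR m * PI -> sin u < 0.
Proof.
  intros Hu. replace u with (u - 2 * IZR m * PI + 2 * IZR m * PI) by ring.
  rewrite sin_period_Z. apply sin_lt_0_var; lra.
Qed.

Lemma sin_nonpos_Z (m : Z) u : (2 * IZR m - 1) * PI <= u <= 2 * IZR m * PI -> sin u <= 0.
Proof.
  intros Hu. replace u with (u - 2 * IZR m * PI + 2 * IZR m * PI) by ring.
  rewrite sin_period_Z. rewrite <- (Ropp_involutive (_ - _)), sin_neg.
  enough (0 <= sin (- (u - 2 * IZR m * PI))) by lra. apply sin_ge_0; lra.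
Qed.

Lemma angle_eq_of_cos_sin A B :
  cos A = cos B -> sin A = sin B -> Rabs (A - B) < 2 * PI -> A = B.
Proof.
  intros Hc Hs Hd. pose proof PI_RGT_0.
  assert (Hsin : sin (A - B) = 0).
  { unfold Rminus. rewrite sin_plus, sin_neg, cos_neg, Hc, Hs. ring. }
  assert (Hcos : cos (A - B) = 1).
  { unfold Rminus. rewrite cos_plus, sin_neg, cos_neg, Hc, Hs.
    pose proof (sin2_cos2 B). unfold Rsqr in *. lra. }
  destruct (sin_eq_0_0 _ Hsin) as [n Hn].
  rewrite Hn, Rabs_mult, (Rabs_right PI) in Hd by lra.
  assert (Hn2 : Rabs (IZR n) < 2) by nra.
  apply Rabs_def2 in Hn2.
  assert (-2 < n < 2)%Z by (split; apply lt_IZR; simpl; lra).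
  assert (n = (-1)%Z \/ n = 0%Z \/ n = 1%Z) as [-> | [-> | ->]] by lia;
    rewrite Hn in Hcos.
  - replace (IZR (-1) * PI) with (- PI) in Hcos by (simpl; ring).
    rewrite cos_neg, cos_PI in Hcos. lra.
  - lra.
  - rewrite Rmult_1_l, cos_PI in Hcos. lra.
Qed.

Lemma Cmod_ge_Rabs_re (z : C) : Rabs (Re z) <= Cmod z.
Proof. eapply Rle_trans; [apply Rmax_l | apply Rmax_Cmod]. Qed.

Lemma Cmod_ge_Rabs_im (z : C) : Rabs (Im z) <= Cmod z.
Proof. eapply Rle_trans; [apply Rmax_r | apply Rmax_Cmod]. Qed.

Lemma Cmod_le_Rabs_sum (w : C) : Cmod w <= Rabs (fst w) + Rabs (snd w).
Proof.
  destruct w as [a b]. unfold Cmod; simpl fst; simpl snd.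
  pose proof (Rabs_pos a). pose proof (Rabs_pos b).
  rewrite <- (sqrt_pow2 (Rabs a + Rabs b)) by lra. apply sqrt_le_1_alt.
  rewrite <- (pow2_abs a), <- (pow2_abs b). nra.
Qed.

Lemma Cmod_add_re_nonpos x y : Cmod (x, y) + x <= 0 -> y = 0 /\ x = - Cmod (x, y).
Proof.
  intros H. pose proof (Cmod_ge_Rabs_re (x, y)) as Hx. unfold Re in Hx; simpl in Hx.
  apply Rabs_le_between in Hx. assert (Hm : Cmod (x, y) = - x) by lra.
  assert (Hm2 : Cmod (x, y) ^ 2 = x ^ 2 + y ^ 2) by apply Cmod2_alt.
  rewrite Hm in Hm2. split; [nra | lra].
Qed.

Lemma polar_form x y : 0 < Cmod (x, y) ->
  exists al, - PI < al <= PI /\ x = Cmod (x, y) * cos al /\ y = Cmod (x, y) * sin al.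
Proof.
  intros Hm. set (m := Cmod (x, y)) in *. pose proof PI_RGT_0.
  assert (Hm2 : m ^ 2 = x ^ 2 + y ^ 2) by apply Cmod2_alt.
  assert (Hx : - m <= x <= m) by (apply Rabs_le_between, (Cmod_ge_Rabs_re (x, y))).
  assert (Hc : -1 <= x / m <= 1).
  { split; apply Rmult_le_reg_r with m; try lra; field_simplify; lra. }
  assert (Hsin : sqrt (1 - (x / m)²) = Rabs y / m).
  { replace (1 - (x / m)²) with ((y / m)²)
      by (unfold Rsqr; field_simplify_eq; lra).
    rewrite sqrt_Rsqr_abs, Rabs_div, (Rabs_right m) by lra. reflexivity. }
  pose proof (acos_bound (x / m)).
  destruct (Rle_or_lt 0 y) as [Hy | Hy].
  - exists (acos (x / m)).
    rewrite sin_acos, cos_acos, Hsin, Rabs_right by lra.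
    repeat split; try lra; field; lra.
  - exists (- acos (x / m)).
    rewrite sin_neg, cos_neg, sin_acos, cos_acos, Hsin, Rabs_left by lra.
    assert (acos (x / m) <> PI).
    { intros E. assert (Hcx : cos (acos (x / m)) = -1) by (rewrite E; apply cos_PI).
      rewrite cos_acos in Hcx by lra.
      assert (Ex : x = x / m * m) by (field; lra).
      rewrite Hcx in Ex. nra. }
    repeat split; try lra; field; lra.
Qed.

Lemma polar_coord_inj r r' u v : 0 < r -> 0 < r' ->
  (r * cos u, r * sin u) = (r' * cos v, r' * sin v) -> r = r' /\ cos u = cos v /\ sin u = sin v.
Proof.
  intros Hr Hr' E. injection E as Ec Es.
  pose proof (sin2_cos2 u). pose proof (sin2_cos2 v). unfold Rsqr in *.
  assert (Hrr : r * r = r' * r').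
  { transitivity ((r * cos u) ^ 2 + (r * sin u) ^ 2); [nra |]. rewrite Ec, Es. nra. }
  assert (r = r') by nra. subst r'.
  split; [| split]; apply (Rmult_eq_reg_l r); lra.
Qed.

Lemma cexp_add u v : cexp (Cplus u v) = Cmult (cexp u) (cexp v).
Proof.
  destruct u as [a b], v as [c d]. unfold cexp, Cplus, Cmult, Re, Im; simpl.
  rewrite exp_plus, cos_plus, sin_plus. f_equal; ring.
Qed.

Lemma Cmod_cexp w : Cmod (cexp w) = exp (Re w).
Proof.
  destruct w as [a b]. unfold Cmod, cexp, Re, Im; simpl fst; simpl snd.
  replace ((exp a * cos b) ^ 2 + (exp a * sin b) ^ 2) with (exp a ^ 2).
  - apply sqrt_pow2, Rlt_le, exp_pos.
  - rewrite <- (Rmult_1_r (exp a ^ 2)) at 1. rewrite <- (sin2_cos2 b). unfold Rsqr. ring.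
Qed.

Lemma cexp_mul_succ_neq0 w : Cplus 1 w <> RtoC 0 -> Cmult (cexp w) (Cplus 1 w) <> RtoC 0.
Proof.
  intros Hw HD. apply (f_equal Cmod) in HD. rewrite Cmod_mult, Cmod_cexp, Cmod_0 in HD.
  apply Rmult_integral in HD as [HD | HD]; [pose proof (exp_pos (Re w)); lra |].
  apply Hw, Cmod_eq_0, HD.
Qed.

Definition wexp (w : C) : C := Cmult w (cexp w).

Lemma wexp_polar x y m al : x = m * cos al -> y = m * sin al ->
  wexp (x, y) = (m * exp x * cos (al + y), m * exp x * sin (al + y)).
Proof.
  intros -> ->. unfold wexp, cexp, Cmult, Re, Im; simpl.
  rewrite cos_plus, sin_plus. f_equal; ring.
Qed.

Lemma is_derive_C_of (f : C -> C) z l :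
  (forall eps, 0 < eps -> exists d, 0 < d /\ forall w, Cmod (Cminus w z) < d ->
     Cmod (Cminus (Cminus (f w) (f z)) (Cmult l (Cminus w z))) <= eps * Cmod (Cminus w z)) ->
  is_derive f z l.
Proof.
  intros H. split; [apply is_linear_scal_l |].
  intros x Hx.
  apply (@is_filter_lim_locally_unique C_AbsRing (AbsRing_NormedModule C_AbsRing)) in Hx. subst x.
  intros [eps Heps]. destruct (H eps Heps) as [d [Hd Hw]].
  exists (mkposreal d Hd). intros w Hwz. simpl.
  change (Cmod (Cminus (Cminus (f w) (f z)) (Cmult (Cminus w z) l)) <= eps * Cmod (Cminus w z)).
  rewrite Cmult_comm. apply Hw. exact Hwz.
Qed.

Lemma is_derive_C_elim (f : C -> C) z l : is_derive f z l ->
  forall eps, 0 < eps -> exists d, 0 < d /\ forall w, Cmod (Cminus w z) < d ->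
     Cmod (Cminus (Cminus (f w) (f z)) (Cmult l (Cminus w z))) <= eps * Cmod (Cminus w z).
Proof.
  intros [_ H] eps Heps. destruct (H z (fun P HP => HP) (mkposreal eps Heps)) as [[d Hd] Hw].
  exists d. split; [exact Hd |]. intros w Hwz. rewrite Cmult_comm. exact (Hw w Hwz).
Qed.

Lemma prod_norm_Cmod (u : C) :
  @norm R_AbsRing (prod_NormedModule R_AbsRing R_NormedModule R_NormedModule) u = Cmod u.
Proof.
  destruct u as [a b]. unfold norm; simpl. unfold prod_norm, Cmod; simpl.
  unfold norm; simpl. unfold abs; simpl. rewrite !Rmult_1_r, <- !Rabs_mult, !Rabs_pos_eq;
    [reflexivity | apply Rle_0_sqr ..].
Qed.

Lemma prod_scal_Cmult (r : R) (u : C) :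
  @scal R_AbsRing (prod_NormedModule R_AbsRing R_NormedModule R_NormedModule) r u
  = Cmult (RtoC r) u.
Proof.
  destruct u as [a b]. unfold scal; simpl. unfold prod_scal, Cmult, RtoC; simpl.
  unfold scal; simpl. unfold mult; simpl. f_equal; ring.
Qed.

Lemma is_derive_RC_of (f : R -> C) x l :
  (forall eps, 0 < eps -> exists d, 0 < d /\ forall y, Rabs (y - x) < d ->
     Cmod (Cminus (Cminus (f y) (f x)) (Cmult (RtoC (y - x)) l)) <= eps * Rabs (y - x)) ->
  is_derive f x l.
Proof.
  intros H. split; [apply is_linear_scal_l |].
  intros x' Hx.
  apply (@is_filter_lim_locally_unique R_AbsRing (AbsRing_NormedModule R_AbsRing)) in Hx. subst x'.
  intros [eps Heps]. destruct (H eps Heps) as [d [Hd Hw]].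
  exists (mkposreal d Hd). intros y Hy. simpl.
  rewrite prod_norm_Cmod, prod_scal_Cmult. exact (Hw y Hy).
Qed.

Lemma is_derive_R_elim (f : R -> R) x l : is_derive f x l ->
  forall eps, 0 < eps -> exists d, 0 < d /\ forall y, Rabs (y - x) < d ->
     Rabs (f y - f x - l * (y - x)) <= eps * Rabs (y - x).
Proof.
  intros [_ H] eps Heps. destruct (H x (fun P HP => HP) (mkposreal eps Heps)) as [[d Hd] Hw].
  exists d. split; [exact Hd |]. intros y Hy. rewrite Rmult_comm. exact (Hw y Hy).
Qed.

Lemma exp_cos_sin_expansion e : 0 < e <= 1 -> exists d, 0 < d /\ forall s t,
  Rabs s < d -> Rabs t < d ->
  Rabs (exp s * cos t - 1 - s) + Rabs (exp s * sin t - t) <= 6 * e * Rmax (Rabs s) (Rabs t).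
Proof.
  intros He.
  pose proof (is_derive_exp 0) as Dexp. rewrite exp_0 in Dexp.
  pose proof (is_derive_cos 0) as Dcos. rewrite sin_0, Ropp_0 in Dcos.
  pose proof (is_derive_sin 0) as Dsin. rewrite cos_0 in Dsin.
  destruct (is_derive_R_elim exp 0 1 Dexp e ltac:(lra)) as [d1 [Hd1 Hexp]].
  destruct (is_derive_R_elim cos 0 0 Dcos e ltac:(lra)) as [d2 [Hd2 Hcos]].
  destruct (is_derive_R_elim sin 0 1 Dsin e ltac:(lra)) as [d3 [Hd3 Hsin]].
  exists (Rmin (Rmin d1 (e / 2)) (Rmin d2 d3)). split; [repeat apply Rmin_glb_lt; lra |].
  intros s t Hs Ht.
  pose proof (Rmin_l (Rmin d1 (e / 2)) (Rmin d2 d3)).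
  pose proof (Rmin_r (Rmin d1 (e / 2)) (Rmin d2 d3)).
  pose proof (Rmin_l d1 (e / 2)). pose proof (Rmin_r d1 (e / 2)).
  pose proof (Rmin_l d2 d3). pose proof (Rmin_r d2 d3).
  specialize (Hexp s). specialize (Hcos t). specialize (Hsin t).
  rewrite exp_0, !Rminus_0_r, Rmult_1_l in Hexp. rewrite sin_0, !Rminus_0_r, Rmult_1_l in Hsin.
  rewrite cos_0, Rminus_0_r, Rmult_0_l, Rminus_0_r in Hcos.
  specialize (Hexp ltac:(lra)). specialize (Hcos ltac:(lra)). specialize (Hsin ltac:(lra)).
  pose proof (Rabs_pos s). pose proof (Rabs_pos t).
  assert (Hes : Rabs (exp s - 1) <= e).
  { replace (exp s - 1) with ((exp s - 1 - s) + s) by ring.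
    eapply Rle_trans; [apply Rabs_triang |]. nra. }
  assert (Hes2 : exp s <= 2) by (apply Rabs_le_between in Hes; lra).
  assert (Hre : Rabs (exp s * cos t - 1 - s) <= 2 * e * Rabs t + e * Rabs s).
  { replace (exp s * cos t - 1 - s) with (exp s * (cos t - 1) + (exp s - 1 - s)) by ring.
    eapply Rle_trans; [apply Rabs_triang |].
    rewrite Rabs_mult, (Rabs_pos_eq (exp s)) by (apply Rlt_le, exp_pos).
    pose proof (Rabs_pos (cos t - 1)). nra. }
  assert (Him : Rabs (exp s * sin t - t) <= 3 * e * Rabs t).
  { replace (exp s * sin t - t) with (exp s * (sin t - t) + (exp s - 1) * t) by ring.
    eapply Rle_trans; [apply Rabs_triang |].
    rewrite !Rabs_mult, (Rabs_pos_eq (exp s)) by (apply Rlt_le, exp_pos).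
    assert (exp s * Rabs (sin t - t) <= 2 * (e * Rabs t))
      by (apply Rmult_le_compat; [apply Rlt_le, exp_pos | apply Rabs_pos | lra | lra]).
    assert (Rabs (exp s - 1) * Rabs t <= e * Rabs t) by (apply Rmult_le_compat_r; lra).
    lra. }
  pose proof (Rmax_l (Rabs s) (Rabs t)). pose proof (Rmax_r (Rabs s) (Rabs t)). nra.
Qed.

Lemma is_derive_cexp_0 : is_derive cexp (RtoC 0) (RtoC 1).
Proof.
  apply is_derive_C_of. intros eps Heps.
  set (e := Rmin eps 1 / 6).
  assert (He : 0 < e <= 1 /\ 6 * e <= eps).
  { pose proof (Rmin_l eps 1). pose proof (Rmin_r eps 1).
    assert (0 < Rmin eps 1) by (apply Rmin_glb_lt; lra). unfold e. lra. }
  destruct (exp_cos_sin_expansion e ltac:(lra)) as [d [Hd Hexp]].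
  exists d. split; [exact Hd |]. intros [s t] Hh.
  replace (Cminus (s, t) (RtoC 0)) with ((s, t) : C) in *
    by (unfold Cminus, Cplus, Copp, RtoC; simpl; f_equal; ring).
  pose proof (Rmax_Cmod (s, t)) as Hmax. simpl fst in Hmax; simpl snd in Hmax.
  pose proof (Rmax_l (Rabs s) (Rabs t)). pose proof (Rmax_r (Rabs s) (Rabs t)).
  specialize (Hexp s t ltac:(lra) ltac:(lra)).
  replace (Cminus (Cminus (cexp (s, t)) (cexp (RtoC 0))) (Cmult (RtoC 1) (s, t)))
    with ((exp s * cos t - 1 - s, exp s * sin t - t) : C).
  2: { unfold cexp, Cminus, Cplus, Copp, Cmult, RtoC, Re, Im; simpl.
       rewrite exp_0, cos_0, sin_0. f_equal; ring. }
  eapply Rle_trans; [apply Cmod_le_Rabs_sum |]. simpl fst; simpl snd.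
  pose proof (Rabs_pos s). nra.
Qed.

(* [wexp (w + h) - wexp w - e^w (1 + w) h = e^w (w (e^h - 1 - h) + h (e^h - 1))] *)
Lemma is_derive_wexp w : is_derive wexp w (Cmult (cexp w) (Cplus 1 w)).
Proof.
  apply is_derive_C_of. intros eps Heps.
  set (c := Cmod (cexp w)). set (M := Cmod w).
  assert (Hc : 0 <= c) by apply Cmod_ge_0. assert (HM : 0 <= M) by apply Cmod_ge_0.
  set (K := c * (M + 2)). assert (HK : 0 <= K) by (unfold K; nra).
  set (e := Rmin 1 (eps / (K + 1))).
  assert (He : 0 < e <= 1 /\ K * e <= eps).
  { assert (0 < eps / (K + 1)) by (apply Rdiv_lt_0_compat; lra).
    pose proof (Rmin_l 1 (eps / (K + 1))) as He1. pose proof (Rmin_r 1 (eps / (K + 1))) as He2.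
    fold e in He1, He2.
    assert (K * (eps / (K + 1)) <= eps).
    { replace (K * (eps / (K + 1))) with (eps - eps / (K + 1)) by (field; lra). lra. }
    assert (K * e <= K * (eps / (K + 1))) by (apply Rmult_le_compat_l; lra).
    split; [split; [unfold e; apply Rmin_glb_lt |] |]; lra. }
  destruct (is_derive_C_elim _ _ _ is_derive_cexp_0 e ltac:(lra)) as [d [Hd Hh]].
  exists (Rmin d e). split; [apply Rmin_glb_lt; lra |]. intros z Hz.
  set (h := Cminus z w) in *.
  pose proof (Rmin_l d e). pose proof (Rmin_r d e). pose proof (Cmod_ge_0 h).
  specialize (Hh h). replace (Cminus h (RtoC 0)) with h in Hh by ring. specialize (Hh ltac:(lra)).
  replace (cexp (RtoC 0)) with (RtoC 1) in Hh
    by (unfold cexp, RtoC, Re, Im; simpl; rewrite exp_0, cos_0, sin_0; f_equal; ring).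
  assert (Hh1 : Cmod (Cminus (cexp h) 1) <= 2 * e).
  { replace (Cminus (cexp h) 1) with (Cplus (Cminus (Cminus (cexp h) 1) (Cmult 1 h)) h) by ring.
    eapply Rle_trans; [apply Cmod_triangle |]. nra. }
  replace (Cminus (Cminus (wexp z) (wexp w)) (Cmult (Cmult (cexp w) (Cplus 1 w)) h))
    with (Cmult (cexp w) (Cplus (Cmult w (Cminus (Cminus (cexp h) 1) (Cmult 1 h)))
                                (Cmult h (Cminus (cexp h) 1)))).
  2: { unfold wexp. replace z with (Cplus w h) by (unfold h; ring). rewrite cexp_add. ring. }
  rewrite Cmod_mult. fold c.
  assert (Cmod (Cplus (Cmult w (Cminus (Cminus (cexp h) 1) (Cmult 1 h)))
                      (Cmult h (Cminus (cexp h) 1))) <= (M + 2) * e * Cmod h).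
  { eapply Rle_trans; [apply Cmod_triangle |]. rewrite !Cmod_mult. fold M.
    pose proof (Cmod_ge_0 (Cminus (cexp h) 1)). nra. }
  apply Rle_trans with (c * ((M + 2) * e * Cmod h)); [apply Rmult_le_compat_l; lra |].
  replace (c * ((M + 2) * e * Cmod h)) with (K * e * Cmod h) by (unfold K; ring).
  apply Rmult_le_compat_r; lra.
Qed.

Lemma inverse_derivative_estimate {X} (F : (X -> Prop) -> Prop) {FF : Filter F}
    (f : C -> C) w0 D (g phi : X -> C) :
  is_derive f w0 D -> D <> RtoC 0 ->
  (forall eps, 0 < eps -> F (fun x => Cmod (Cminus (g x) w0) < eps)) ->
  F (fun x => f (g x) = phi x) ->
  forall eps, 0 < eps -> F (fun x =>
    Cmod (Cminus (Cminus (g x) w0) (Cdiv (Cminus (phi x) (f w0)) D))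
      <= eps * Cmod (Cminus (phi x) (f w0))).
Proof.
  intros Hf HD Hg Hphi eps Heps.
  set (dl := Cmod D). assert (Hdl : 0 < dl) by (apply Cmod_gt_0; exact HD).
  set (e1 := Rmin (dl / 2) (eps * dl * dl / 2)).
  assert (He1 : 0 < e1 /\ e1 <= dl / 2 /\ e1 <= eps * dl * dl / 2).
  { assert (0 < eps * dl * dl / 2)
      by (apply Rdiv_lt_0_compat; [repeat apply Rmult_lt_0_compat |]; lra).
    unfold e1. repeat split; [apply Rmin_glb_lt | apply Rmin_l | apply Rmin_r]; lra. }
  destruct (is_derive_C_elim f w0 D Hf e1 (proj1 He1)) as [d [Hd Hexp]].
  generalize (filter_and _ _ (Hg d Hd) Hphi). apply filter_imp. intros x [Hx Hfx].
  specialize (Hexp (g x) Hx). rewrite Hfx in Hexp.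
  set (h := Cminus (g x) w0) in *. set (dz := Cminus (phi x) (f w0)) in *.
  set (r := Cminus dz (Cmult D h)) in *.
  replace (Cminus h (Cdiv dz D)) with (Copp (Cdiv r D)) by (unfold r, Cdiv; field; exact HD).
  unfold Cdiv. rewrite Cmod_opp, Cmod_mult, Cmod_inv by exact HD. fold dl.
  assert (Hlow : dl * Cmod h <= Cmod dz + e1 * Cmod h).
  { unfold dl. rewrite <- Cmod_mult.
    replace (Cmult D h) with (Cplus dz (Copp r)) by (unfold r; ring).
    eapply Rle_trans; [apply Cmod_triangle |]. rewrite Cmod_opp. lra. }
  pose proof (Cmod_ge_0 h). pose proof (Cmod_ge_0 dz).
  assert (Hh : Cmod h <= 2 * Cmod dz / dl).
  { apply (Rmult_le_reg_r dl); [lra |]. unfold Rdiv. rewrite Rmult_assoc, Rinv_l by lra. nra. }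
  apply Rle_trans with (e1 * Cmod h * / dl);
    [apply Rmult_le_compat_r; [left; apply Rinv_0_lt_compat |]; lra |].
  apply Rle_trans with (eps * dl * dl / 2 * (2 * Cmod dz / dl) * / dl).
  - apply Rmult_le_compat_r; [left; apply Rinv_0_lt_compat; lra |].
    apply Rmult_le_compat; lra.
  - right. field. lra.
Qed.

(** * The log-polar equations *)

(* [w = e^(a + i b)], [b] its principal argument, solves [w e^w = e^(L + i T)] with the
   argument [b + Im w] of [w e^w] equal to [T] itself, not merely modulo [2 PI]. *)
Definition log_polar_root (L T a b : R) : Prop :=
  - PI < b <= PI /\ a + exp a * cos b = L /\ b + exp a * sin b = T.

(* [L] as a function of [b], once [a] is eliminated through [exp a = (T - b) / sin b]. *)
Definition angle_level (T b : R) : R := ln ((T - b) / sin b) + (T - b) * cos b / sin b.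

Lemma angle_level_decreasing T u v :
  0 < u -> u < v -> v < PI -> v < T -> angle_level T v < angle_level T u.
Proof.
  intros Hu Huv HvPI HvT.
  set (dh b := - ((T - b + sin b * cos b) ^ 2 + sin b ^ 4) / ((T - b) * sin b ^ 2)).
  assert (Hderiv : forall b, u <= b <= v -> is_derive (angle_level T) b (dh b)).
  { intros b Hb. assert (0 < sin b) by (apply sin_gt_0; lra).
    assert (Hc2 : cos b ^ 2 = 1 - sin b ^ 2) by (rewrite <- (sin2_cos2 b); unfold Rsqr; ring).
    unfold angle_level, dh. auto_derive.
    - repeat split; try lra. apply Rdiv_lt_0_compat; lra.
    - field_simplify_eq; [rewrite Hc2; ring | lra..]. }
  assert (Hneg : forall b, u <= b <= v -> dh b < 0).
  { intros b Hb. assert (0 < sin b) by (apply sin_gt_0; lra). unfold dh.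
    rewrite Rdiv_opp_l. apply Ropp_lt_gt_0_contravar, Rdiv_lt_0_compat.
    - assert (0 < sin b ^ 4) by (apply pow_lt; lra).
      pose proof (pow2_ge_0 (T - b + sin b * cos b)). lra.
    - apply Rmult_lt_0_compat; [lra | apply pow_lt; lra]. }
  destruct (MVT_cor2 (angle_level T) dh u v Huv) as [c [Ec Hc]].
  - intros c Hc. apply is_derive_Reals, Hderiv. lra.
  - assert (dh c < 0) by (apply Hneg; lra). nra.
Qed.

Lemma root_angle_range L T a b : -1 < L -> log_polar_root L T a b -> - PI < b < PI.
Proof.
  intros HL [[Hb1 [Hb2 | ->]] [E1 E2]]; [lra |].
  rewrite cos_PI in E1. pose proof (exp_ineq1_le a). lra.
Qed.

Lemma root_angle_sign L T a b : -1 < L -> log_polar_root L T a b ->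
  (0 < T -> 0 < b < T) /\ (T = 0 -> b = 0) /\ (T < 0 -> T < b < 0).
Proof.
  intros HL Hr. pose proof (root_angle_range L T a b HL Hr).
  destruct Hr as [_ [_ E]]. pose proof (exp_pos a).
  destruct (Rtotal_order b 0) as [Hb | [-> | Hb]].
  - assert (sin b < 0) by (apply sin_lt_0_var; lra).
    assert (exp a * sin b < 0) by nra. repeat split; intros; lra.
  - rewrite sin_0 in E. repeat split; intros; lra.
  - assert (0 < sin b) by (apply sin_gt_0; lra).
    assert (0 < exp a * sin b) by nra. repeat split; intros; lra.
Qed.

Lemma log_polar_root_opp L T a b :
  log_polar_root L T a b -> b <> PI -> log_polar_root L (- T) a (- b).
Proof.
  intros [[Hb1 Hb2] [E1 E2]] Hb. repeat split.
  - lra.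
  - destruct Hb2; [lra | congruence].
  - rewrite cos_neg. exact E1.
  - rewrite sin_neg. lra.
Qed.

Lemma root_angle_level L T a b : -1 < L -> log_polar_root L T a b -> 0 < b ->
  b < PI /\ b < T /\ exp a = (T - b) / sin b /\ angle_level T b = L.
Proof.
  intros HL Hr Hb. pose proof (root_angle_range L T a b HL Hr).
  destruct Hr as [_ [E1 E2]].
  assert (Hs : 0 < sin b) by (apply sin_gt_0; lra).
  assert (0 < exp a * sin b) by (pose proof (exp_pos a); nra).
  assert (Ea : exp a = (T - b) / sin b) by (rewrite <- E2; field; lra).
  repeat split; try lra.
  unfold angle_level. rewrite <- Ea, ln_exp, <- E1, Ea. field. lra.
Qed.

Lemma log_polar_root_of_level T b : 0 < b < PI -> b < T ->
  log_polar_root (angle_level T b) T (ln ((T - b) / sin b)) b.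
Proof.
  intros Hb HbT. assert (Hs : 0 < sin b) by (apply sin_gt_0; lra).
  unfold log_polar_root. rewrite exp_ln by (apply Rdiv_lt_0_compat; lra).
  repeat split; try lra; unfold angle_level; field; lra.
Qed.

Lemma angle_level_gt_near_0 L T : 0 < T -> exists b, 0 < b < Rmin PI T / 2 /\ L < angle_level T b.
Proof.
  intros HT. pose proof PI_RGT_0. pose proof (exp_pos L).
  assert (HM : 0 < Rmin PI T <= PI) by (split; [apply Rmin_glb_lt | apply Rmin_l]; lra).
  set (b := Rmin (Rmin PI T / 4) (T / (2 * exp L))).
  assert (Hb : 0 < b <= Rmin PI T / 4) by (split; [apply Rmin_glb_lt | apply Rmin_l];
    try apply Rdiv_lt_0_compat; lra).
  assert (HbT : b * (2 * exp L) <= T).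
  { replace T with (T / (2 * exp L) * (2 * exp L)) by (field; lra).
    apply Rmult_le_compat_r; [lra | apply Rmin_r]. }
  pose proof (Rmin_r PI T). pose proof (sin_lt_x b (proj1 Hb)).
  assert (Hs : 0 < sin b) by (apply sin_gt_0; lra).
  assert (Hc : 0 <= cos b) by (apply cos_ge_0; lra).
  exists b. split; [lra |]. unfold angle_level.
  assert (HE : exp L < (T - b) / sin b).
  { apply (Rmult_lt_reg_r (sin b)); [lra |]. unfold Rdiv. rewrite Rmult_assoc, Rinv_l by lra. nra. }
  assert (L < ln ((T - b) / sin b)) by (rewrite <- (ln_exp L); apply ln_increasing; lra).
  assert (0 <= (T - b) * cos b / sin b) by (apply Rdiv_le_0_compat; [apply Rmult_le_pos |]; lra).
  lra.
Qed.

(* From [ln E <= E - 1]; the bound tends to [-1] as [b] tends to [Rmin PI T]. *)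
Lemma angle_level_le_half_cot T b : 0 < b < PI -> b < T ->
  angle_level T b <= (T - b) * cos (b / 2) / sin (b / 2) - 1.
Proof.
  intros Hb HbT.
  assert (Hs : 0 < sin (b / 2)) by (apply sin_gt_0; lra).
  assert (Hc : 0 < cos (b / 2)) by (apply cos_gt_0; lra).
  assert (Hsb : sin b = 2 * sin (b / 2) * cos (b / 2))
    by (rewrite <- sin_2a; f_equal; field).
  assert (Hcb : cos b = 2 * cos (b / 2) * cos (b / 2) - 1)
    by (rewrite <- cos_2a_cos; f_equal; field).
  assert (HE : 0 < (T - b) / sin b) by (apply Rdiv_lt_0_compat; nra).
  pose proof (exp_ineq1_le (ln ((T - b) / sin b))) as Hln. rewrite exp_ln in Hln by exact HE.
  unfold angle_level.
  enough ((T - b) / sin b + (T - b) * cos b / sin b = (T - b) * cos (b / 2) / sin (b / 2)) by lra.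
  rewrite Hsb, Hcb. field. lra.
Qed.

Lemma angle_level_lt_near_end L T b1 : -1 < L -> 0 < b1 < Rmin PI T ->
  exists b2, b1 < b2 < Rmin PI T /\ angle_level T b2 < L.
Proof.
  intros HL Hb1. set (M := Rmin PI T) in *. pose proof PI_RGT_0.
  assert (HMPI : M <= PI) by apply Rmin_l.
  assert (HMT : M <= T) by apply Rmin_r.
  set (g b := (T - b) * cos (b / 2) / sin (b / 2)).
  assert (HgM : g M = 0).
  { unfold g. destruct (Rle_or_lt PI T) as [HPT | HPT].
    - replace M with PI by (symmetry; apply Rmin_left; lra). rewrite cos_PI2. field.
      rewrite sin_PI2. lra.
    - replace M with T by (symmetry; apply Rmin_right; lra). field.
      apply Rgt_not_eq, sin_gt_0; lra. }
  assert (Hcont : continuous g M).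
  { apply ex_derive_continuous_R. unfold g. auto_derive.
    apply Rgt_not_eq, sin_gt_0; lra. }
  destruct (filterlim_Rabs_lt _ g (g M) (L + 1) Hcont ltac:(lra)) as [d Hd].
  set (b2 := Rmax ((b1 + M) / 2) (M - d / 2)).
  assert (Hb2 : b1 < b2 < M).
  { split.
    - eapply Rlt_le_trans; [| apply Rmax_l]. lra.
    - apply Rmax_lub_lt; pose proof (cond_pos d); lra. }
  exists b2. split; [exact Hb2 |].
  assert (Hgb2 : Rabs (g b2 - g M) < L + 1).
  { apply Hd. change (Rabs (b2 - M) < d). rewrite Rabs_left by lra.
    assert (M - d / 2 <= b2) by apply Rmax_r. pose proof (cond_pos d). lra. }
  rewrite HgM, Rminus_0_r in Hgb2. apply Rabs_def2 in Hgb2.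
  pose proof (angle_level_le_half_cot T b2 ltac:(lra) ltac:(lra)). fold (g b2) in *. lra.
Qed.

Lemma angle_level_onto L T : -1 < L -> 0 < T ->
  exists b, 0 < b < PI /\ b < T /\ angle_level T b = L.
Proof.
  intros HL HT. pose proof (Rmin_l PI T). pose proof (Rmin_r PI T).
  destruct (angle_level_gt_near_0 L T HT) as [b1 [Hb1 H1]].
  destruct (angle_level_lt_near_end L T b1 HL ltac:(lra)) as [b2 [Hb2 H2]].
  destruct (Ranalysis5.IVT_interv (fun b => L - angle_level T b) b1 b2) as [b [Hb Hlevel]];
    try lra.
  - intros b Hb. apply continuity_pt_of_ex_derive.
    assert (0 < sin b) by (apply sin_gt_0; lra).
    unfold angle_level. auto_derive. repeat split; try lra.
    apply Rdiv_lt_0_compat; lra.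
  - exists b. repeat split; lra.
Qed.

Lemma log_polar_root_exists L T : -1 < L -> exists a b, log_polar_root L T a b.
Proof.
  intros HL. pose proof PI_RGT_0.
  destruct (Rtotal_order T 0) as [HT | [-> | HT]].
  - destruct (angle_level_onto L (- T) HL ltac:(lra)) as [b [Hb [HbT <-]]].
    exists (ln ((- T - b) / sin b)), (- b).
    rewrite <- (Ropp_involutive T) at 2.
    apply log_polar_root_opp; [apply log_polar_root_of_level |]; lra.
  - destruct (Ranalysis5.IVT_interv (fun a => a + exp a - L) (L - 1 - exp L) L)
      as [a [_ Ha]].
    + intros a _. apply continuity_pt_of_ex_derive. auto_derive. exact I.
    + pose proof (exp_pos L). lra.
    + assert (exp (L - 1 - exp L) < exp L) by (apply exp_increasing; pose proof (exp_pos L); lra).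
      lra.
    + pose proof (exp_pos L). lra.
    + exists a, 0. repeat split; rewrite ?cos_0, ?sin_0; lra.
  - destruct (angle_level_onto L T HL HT) as [b [Hb [HbT <-]]].
    eexists _, _. apply log_polar_root_of_level; lra.
Qed.

Lemma log_polar_root_unique_pos L T a b a' b' : -1 < L -> 0 < T ->
  log_polar_root L T a b -> log_polar_root L T a' b' -> a = a' /\ b = b'.
Proof.
  intros HL HT Hr Hr'.
  destruct (proj1 (root_angle_sign L T a b HL Hr) HT) as [Hb _].
  destruct (proj1 (root_angle_sign L T a' b' HL Hr') HT) as [Hb' _].
  destruct (root_angle_level L T a b HL Hr Hb) as [HbPI [HbT [Ea La]]].
  destruct (root_angle_level L T a' b' HL Hr' Hb') as [HbPI' [HbT' [Ea' La']]].
  assert (Eb : b = b').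
  { destruct (Rtotal_order b b') as [Hlt | [Heq | Hlt]]; [| exact Heq |].
    - pose proof (angle_level_decreasing T b b' Hb Hlt HbPI' HbT'). lra.
    - pose proof (angle_level_decreasing T b' b Hb' Hlt HbPI HbT). lra. }
  subst b'. split; [| reflexivity].
  rewrite <- (ln_exp a), <- (ln_exp a'), Ea, Ea'. reflexivity.
Qed.

Lemma log_polar_root_unique L T a b a' b' : -1 < L ->
  log_polar_root L T a b -> log_polar_root L T a' b' -> a = a' /\ b = b'.
Proof.
  intros HL Hr Hr'. pose proof PI_RGT_0.
  destruct (root_angle_sign L T a b HL Hr) as [_ [Hb0 Hbn]].
  destruct (root_angle_sign L T a' b' HL Hr') as [_ [Hb0' Hbn']].
  destruct (Rtotal_order T 0) as [HT | [HT | HT]].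
  - specialize (Hbn HT). specialize (Hbn' HT).
    destruct (log_polar_root_unique_pos L (- T) a (- b) a' (- b')) as [Ea Eb];
      [assumption | lra | apply log_polar_root_opp; [assumption | apply Rlt_not_eq; lra] .. |].
    split; [exact Ea | lra].
  - destruct Hr as [_ [E _]], Hr' as [_ [E' _]].
    rewrite (Hb0 HT), cos_0 in E. rewrite (Hb0' HT), cos_0 in E'.
    split; [| rewrite Hb0, Hb0'; auto].
    destruct (Rtotal_order a a') as [Ha | [Ha | Ha]];
      [pose proof (exp_increasing _ _ Ha) | | pose proof (exp_increasing _ _ Ha)]; lra.
  - exact (log_polar_root_unique_pos L T a b a' b' HL HT Hr Hr').
Qed.

(* An arbitrary pair unless [L > -1]. *)
Definition polar_root (L T : R) : R * R :=
  epsilon (inhabits (0, 0)) (fun p => log_polar_root L T (fst p) (snd p)).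

Lemma polar_root_spec L T : -1 < L ->
  log_polar_root L T (fst (polar_root L T)) (snd (polar_root L T)).
Proof.
  intros HL. apply (epsilon_spec (inhabits (0, 0)) (fun p => log_polar_root L T (fst p) (snd p))).
  destruct (log_polar_root_exists L T HL) as [a [b H]]. exists (a, b). exact H.
Qed.

Definition W_polar (L T : R) : C :=
  let (a, b) := polar_root L T in (exp a * cos b, exp a * sin b).

Lemma W_polar_eq L T a b : -1 < L -> log_polar_root L T a b ->
  W_polar L T = (exp a * cos b, exp a * sin b).
Proof.
  intros HL Hr. pose proof (polar_root_spec L T HL) as Hr'. unfold W_polar.
  destruct (polar_root L T) as [a' b']. simpl in Hr'.
  destruct (log_polar_root_unique L T a b a' b' HL Hr Hr') as [-> ->]. reflexivity.
Qed.

Lemma wexp_W_polar L T : -1 < L -> wexp (W_polar L T) = (exp L * cos T, exp L * sin T).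
Proof.
  intros HL. destruct (log_polar_root_exists L T HL) as [a [b Hr]].
  rewrite (W_polar_eq L T a b HL Hr), (wexp_polar _ _ (exp a) b eq_refl eq_refl).
  destruct Hr as [_ [E1 E2]]. rewrite E2, <- exp_plus, E1. reflexivity.
Qed.

Lemma W_polar_im_abs L T : -1 < L -> Rabs (Im (W_polar L T)) <= Rabs T.
Proof.
  intros HL. destruct (log_polar_root_exists L T HL) as [a [b Hr]].
  rewrite (W_polar_eq L T a b HL Hr). unfold Im; simpl.
  destruct (root_angle_sign L T a b HL Hr) as [Hp [Hz Hn]].
  destruct Hr as [_ [_ E]]. replace (exp a * sin b) with (T - b) by lra.
  destruct (Rtotal_order T 0) as [HT | [HT | HT]].
  - specialize (Hn HT). rewrite !Rabs_left by lra. lra.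
  - rewrite HT, (Hz HT), Rminus_0_r, Rabs_R0. lra.
  - specialize (Hp HT). rewrite !Rabs_right by lra. lra.
Qed.

Lemma Cmod_W_polar L T : -1 < L -> Cmod (W_polar L T) * exp (Re (W_polar L T)) = exp L.
Proof.
  intros HL. destruct (log_polar_root_exists L T HL) as [a [b Hr]].
  rewrite (W_polar_eq L T a b HL Hr).
  change (exp a * cos b, exp a * sin b) with (cexp (a, b)).
  rewrite Cmod_cexp. unfold Re, cexp; simpl.
  destruct Hr as [_ [E _]]. rewrite <- exp_plus, E. reflexivity.
Qed.

(** * Branch ranges *)

Lemma polar_angle_sign m al y : 0 < m -> - PI < al <= PI -> y = m * sin al ->
  (0 < y -> 0 < al < PI) /\ (y < 0 -> - PI < al < 0) /\ (y = 0 -> al = 0 \/ al = PI).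
Proof.
  intros Hm Hal ->. pose proof PI_RGT_0.
  destruct (Rtotal_order al 0) as [Ha | [-> | Ha]].
  - assert (sin al < 0) by (apply sin_lt_0_var; lra).
    repeat split; intros; nra.
  - rewrite sin_0. repeat split; intros; lra.
  - destruct Hal as [_ [Ha' | ->]].
    + assert (0 < sin al) by (apply sin_gt_0; lra). repeat split; intros; nra.
    + rewrite sin_PI. repeat split; intros; lra.
Qed.

Lemma lw_phi_sin x y al m : sin y <> 0 -> x = m * cos al -> y = m * sin al ->
  (x - lw_phi y) * sin y = m * sin (al + y).
Proof.
  intros Hs Ex Ey. unfold lw_phi. rewrite sin_plus.
  replace ((x - - y * cos y / sin y) * sin y) with (x * sin y + y * cos y) by (field; exact Hs).
  rewrite Ex, Ey. ring.
Qed.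

Section BranchBoundary.

Variables (x y al m : R).
Hypotheses (Hm : 0 < m) (Hal : - PI < al <= PI) (Ex : x = m * cos al) (Ey : y = m * sin al).

Lemma lw_phi_lt_iff_upper (j : Z) : 0 < y -> 2 * IZR j * PI < y < (2 * IZR j + 1) * PI ->
  (lw_phi y < x <-> al + y < (2 * IZR j + 1) * PI) /\
  (lw_phi y <= x <-> al + y <= (2 * IZR j + 1) * PI).
Proof.
  intros Hy Hyj. pose proof PI_RGT_0.
  pose proof (proj1 (polar_angle_sign m al y Hm Hal Ey) Hy).
  assert (Hs : 0 < sin y) by (apply (sin_pos_Z j); lra).
  pose proof (lw_phi_sin x y al m (Rgt_not_eq _ _ Hs) Ex Ey) as E.
  assert (Hj : IZR (j + 1) = IZR j + 1) by apply plus_IZR.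
  repeat split; intros Hx.
  - assert (0 < sin (al + y)) by nra.
    destruct (Rlt_or_le (al + y) ((2 * IZR j + 1) * PI)) as [| Hc]; [assumption |].
    assert (sin (al + y) <= 0) by (apply (sin_nonpos_Z (j + 1)); rewrite Hj; lra). lra.
  - assert (0 < sin (al + y)) by (apply (sin_pos_Z j); lra). nra.
  - assert (0 <= sin (al + y)) by nra.
    destruct (Rle_or_lt (al + y) ((2 * IZR j + 1) * PI)) as [| Hc]; [assumption |].
    assert (sin (al + y) < 0) by (apply (sin_neg_Z (j + 1)); rewrite Hj; lra). lra.
  - assert (0 <= sin (al + y)) by (apply (sin_nonneg_Z j); lra). nra.
Qed.

Lemma lw_phi_lt_iff_lower (j : Z) : y < 0 -> (2 * IZR j - 1) * PI < y < 2 * IZR j * PI ->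
  (lw_phi y < x <-> (2 * IZR j - 1) * PI < al + y) /\
  (lw_phi y <= x <-> (2 * IZR j - 1) * PI <= al + y).
Proof.
  intros Hy Hyj. pose proof PI_RGT_0.
  pose proof (proj1 (proj2 (polar_angle_sign m al y Hm Hal Ey)) Hy).
  assert (Hs : sin y < 0) by (apply (sin_neg_Z j); lra).
  pose proof (lw_phi_sin x y al m (Rlt_not_eq _ _ Hs) Ex Ey) as E.
  assert (Hj : IZR (j - 1) = IZR j - 1) by apply minus_IZR.
  repeat split; intros Hx.
  - assert (sin (al + y) < 0) by nra.
    destruct (Rlt_or_le ((2 * IZR j - 1) * PI) (al + y)) as [| Hc]; [assumption |].
    assert (0 <= sin (al + y)) by (apply (sin_nonneg_Z (j - 1)); rewrite Hj; lra). lra.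
  - assert (sin (al + y) < 0) by (apply (sin_neg_Z j); lra). nra.
  - assert (sin (al + y) <= 0) by nra.
    destruct (Rle_or_lt ((2 * IZR j - 1) * PI) (al + y)) as [| Hc]; [assumption |].
    assert (0 < sin (al + y)) by (apply (sin_pos_Z (j - 1)); rewrite Hj; lra). lra.
  - assert (sin (al + y) <= 0) by (apply (sin_nonpos_Z j); lra). nra.
Qed.

Lemma polar_angle_sum_bounds :
  (0 < y -> y < al + y < y + PI) /\ (y < 0 -> y - PI < al + y < y) /\
  (y = 0 -> al + y = 0 /\ 0 < x \/ al + y = PI /\ x < 0).
Proof.
  destruct (polar_angle_sign m al y Hm Hal Ey) as [Hpos [Hneg Hzero]].
  split; [| split]; intros Hy.
  - specialize (Hpos Hy). lra.
  - specialize (Hneg Hy). lra.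
  - destruct (Hzero Hy) as [-> | ->]; rewrite Ex; [left | right].
    + rewrite cos_0. lra.
    + rewrite cos_PI. lra.
Qed.

Lemma lw_branch0_iff_angle : ~ (y = 0 /\ x < -1) -> lw_branch 0 (x, y) <-> - PI < al + y <= PI.
Proof.
  intros Hray. pose proof PI_RGT_0.
  destruct polar_angle_sum_bounds as [Hpos [Hneg Hzero]].
  unfold lw_branch, Re, Im; simpl fst; simpl snd. rewrite Z.eqb_refl.
  pose proof (lw_phi_lt_iff_upper 0) as Hup. pose proof (lw_phi_lt_iff_lower 0) as Hlo.
  simpl IZR in *. split.
  - intros [[Hy Hx] | [[Hy Hx] | [Hy Hx]]].
    + specialize (Hneg (proj2 Hy)). destruct (Hlo ltac:(lra) ltac:(lra)) as [Hl _]. lra.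
    + destruct (Hzero Hy); lra.
    + specialize (Hpos (proj1 Hy)). destruct (Hup ltac:(lra) ltac:(lra)) as [_ Hl]. lra.
  - intros Hth. destruct (Rtotal_order y 0) as [Hy | [Hy | Hy]].
    + left. specialize (Hneg Hy). destruct (Hlo ltac:(lra) ltac:(lra)) as [Hl _]. split; lra.
    + right; left. split; [exact Hy |]. apply Rnot_lt_le. intros Hx. apply Hray. split; lra.
    + right; right. specialize (Hpos Hy). destruct (Hup ltac:(lra) ltac:(lra)) as [_ Hl].
      split; lra.
Qed.

Lemma lw_branch_pos_iff_angle (k : Z) : (0 < k)%Z ->
  lw_branch k (x, y) <-> (2 * IZR k - 1) * PI < al + y <= (2 * IZR k + 1) * PI.
Proof.
  intros Hk. pose proof PI_RGT_0.
  destruct polar_angle_sum_bounds as [Hpos [Hneg Hzero]].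
  unfold lw_branch, Re, Im; simpl fst; simpl snd.
  rewrite (proj2 (Z.eqb_neq k 0)), (proj2 (Z.ltb_lt 0 k)) by lia.
  assert (HkPI : PI <= IZR k * PI).
  { assert (1 <= IZR k) by (apply IZR_le; lia).
    rewrite <- (Rmult_1_l PI) at 1. apply Rmult_le_compat_r; lra. }
  pose proof (lw_phi_lt_iff_upper (k - 1)) as Hup1. pose proof (lw_phi_lt_iff_upper k) as Hup.
  rewrite minus_IZR in Hup1. split.
  - intros [[Hy Hx] | [Hy | [Hy Hx]]].
    + specialize (Hpos ltac:(lra)). destruct (Hup1 ltac:(lra) ltac:(lra)) as [_ Hl]. lra.
    + specialize (Hpos ltac:(lra)). lra.
    + specialize (Hpos ltac:(lra)). destruct (Hup ltac:(lra) ltac:(lra)) as [_ Hl]. lra.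
  - intros Hth. destruct (Rtotal_order y 0) as [Hy | [Hy | Hy]];
      [specialize (Hneg Hy); lra | destruct (Hzero Hy); lra |].
    specialize (Hpos Hy).
    destruct (Rlt_or_le y ((2 * IZR k - 1) * PI)) as [Hy1 | Hy1];
      [| destruct (Rle_or_lt y (2 * IZR k * PI)) as [Hy2 | Hy2]].
    + left. destruct (Hup1 ltac:(lra) ltac:(lra)) as [_ Hl]. split; lra.
    + right; left. lra.
    + right; right. destruct (Hup ltac:(lra) ltac:(lra)) as [_ Hl]. split; lra.
Qed.

Lemma lw_branch_neg_iff_angle (k : Z) : (k < 0)%Z -> ~ (y = 0 /\ x < -1) ->
  lw_branch k (x, y) <-> (2 * IZR k - 1) * PI < al + y <= (2 * IZR k + 1) * PI.
Proof.
  intros Hk Hray. pose proof PI_RGT_0.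
  destruct polar_angle_sum_bounds as [Hpos [Hneg Hzero]].
  unfold lw_branch, Re, Im; simpl fst; simpl snd.
  rewrite (proj2 (Z.eqb_neq k 0)), (proj2 (Z.ltb_ge 0 k)) by lia.
  assert (HkPI : IZR k * PI <= - PI).
  { assert (IZR k <= -1) by (apply IZR_le; lia).
    replace (- PI) with (-1 * PI) by ring. apply Rmult_le_compat_r; lra. }
  pose proof (lw_phi_lt_iff_lower (k + 1)) as Hlo1. pose proof (lw_phi_lt_iff_lower k) as Hlo.
  rewrite plus_IZR in Hlo1. split.
  - intros [[_ Hx] | [[Hy Hx] | [Hy | [Hy Hx]]]]; [lra | | |].
    + specialize (Hneg ltac:(lra)). destruct (Hlo1 ltac:(lra) ltac:(lra)) as [Hl _]. lra.
    + specialize (Hneg ltac:(lra)). lra.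
    + specialize (Hneg ltac:(lra)). destruct (Hlo ltac:(lra) ltac:(lra)) as [Hl _]. lra.
  - intros Hth. right.
    destruct (Rtotal_order y 0) as [Hy | [Hy | Hy]];
      [| destruct (Hzero Hy); lra | specialize (Hpos Hy); lra].
    specialize (Hneg Hy).
    destruct (Rlt_or_le y (2 * IZR k * PI)) as [Hy1 | Hy1];
      [| destruct (Rle_or_lt y ((2 * IZR k + 1) * PI)) as [Hy2 | Hy2]].
    + right; right. destruct (Hlo ltac:(lra) ltac:(lra)) as [Hl _]. split; lra.
    + right; left. lra.
    + left. destruct (Hlo1 ltac:(lra) ltac:(lra)) as [Hl _]. split; lra.
Qed.

Lemma lw_branch_iff_angle (k : Z) : ~ (y = 0 /\ x < -1) ->
  lw_branch k (x, y) <-> (2 * IZR k - 1) * PI < al + y <= (2 * IZR k + 1) * PI.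
Proof.
  intros Hray. destruct (Z.lt_trichotomy k 0) as [Hk | [-> | Hk]].
  - exact (lw_branch_neg_iff_angle k Hk Hray).
  - rewrite (lw_branch0_iff_angle Hray). simpl IZR.
    replace ((2 * 0 - 1) * PI) with (- PI) by ring. replace ((2 * 0 + 1) * PI) with PI by ring.
    reflexivity.
  - exact (lw_branch_pos_iff_angle k Hk).
Qed.

End BranchBoundary.

Lemma W_polar_in_branch k L T : -1 < L -> (2 * IZR k - 1) * PI < T <= (2 * IZR k + 1) * PI ->
  lw_branch k (W_polar L T).
Proof.
  intros HL HT. destruct (log_polar_root_exists L T HL) as [a [b Hr]].
  rewrite (W_polar_eq L T a b HL Hr).
  pose proof (exp_pos a) as Hm. pose proof (root_angle_range L T a b HL Hr).
  destruct Hr as [Hb [_ E]].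
  apply (lw_branch_iff_angle _ _ b (exp a) Hm Hb eq_refl eq_refl).
  - intros [Hy Hx]. destruct (polar_angle_sign (exp a) b _ Hm Hb eq_refl) as [_ [_ Hz]].
    destruct (Hz Hy) as [-> | ->]; [rewrite cos_0 in Hx | ]; lra.
  - lra.
Qed.

Lemma branch_root_eq_W_polar k L T w : -1 < L ->
  (2 * IZR k - 1) * PI < T <= (2 * IZR k + 1) * PI ->
  lw_branch k w -> wexp w = (exp L * cos T, exp L * sin T) -> w = W_polar L T.
Proof.
  intros HL HT Hbr Hw. destruct w as [x y]. pose proof (exp_pos L). pose proof PI_RGT_0.
  assert (Hm : 0 < Cmod (x, y)).
  { apply Cmod_gt_0. intros E. rewrite E in Hw. unfold wexp in Hw. rewrite Cmult_0_l in Hw.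
    injection Hw as Hc Hs. pose proof (sin2_cos2 T). unfold Rsqr in *.
    assert (cos T = 0) by (apply (Rmult_eq_reg_l (exp L)); lra).
    assert (sin T = 0) by (apply (Rmult_eq_reg_l (exp L)); lra). nra. }
  set (m := Cmod (x, y)) in *.
  destruct (polar_form x y Hm) as [al [Hal [Ex Ey]]]. fold m in Ex, Ey.
  rewrite (wexp_polar x y m al Ex Ey) in Hw.
  assert (0 < m * exp x) by (pose proof (exp_pos x); nra).
  destruct (polar_coord_inj (m * exp x) (exp L) (al + y) T ltac:(lra) ltac:(lra) Hw)
    as [Hmod [Hc Hs]].
  assert (Hray : ~ (y = 0 /\ x < -1)).
  { intros [Hy Hx]. destruct (proj2 (proj2 (polar_angle_sign m al y Hm Hal Ey)) Hy) as [-> | ->].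
    - rewrite cos_0 in Ex. lra.
    - rewrite cos_PI in Ex. pose proof (neg_mul_exp_lt x Hx).
      assert (exp (-1) < exp L) by (apply exp_increasing; lra). nra. }
  pose proof (proj1 (lw_branch_iff_angle x y al m Hm Hal Ex Ey k Hray) Hbr).
  assert (Hth : al + y = T)
    by (apply angle_eq_of_cos_sin; [exact Hc | exact Hs | apply Rabs_def1; lra]).
  assert (Hr : log_polar_root L T (ln m) al).
  { rewrite <- (ln_exp L), <- Hmod, ln_mult, ln_exp by (try apply exp_pos; lra).
    unfold log_polar_root. rewrite exp_ln by exact Hm. rewrite <- Ex, <- Ey. repeat split; lra. }
  rewrite (W_polar_eq L T _ _ HL Hr), exp_ln by exact Hm. rewrite <- Ex, <- Ey. reflexivity.
Qed.

Lemma LambertW_polar k L T : -1 < L -> (2 * IZR k - 1) * PI < T <= (2 * IZR k + 1) * PI ->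
  LambertW k (exp L * cos T, exp L * sin T) = W_polar L T.
Proof.
  intros HL HT. set (z := (exp L * cos T, exp L * sin T)).
  assert (Hspec : lw_branch k (LambertW k z) /\ wexp (LambertW k z) = z).
  { apply (epsilon_spec (inhabits (0%R, 0%R)) (fun w => lw_branch k w /\ wexp w = z)).
    exists (W_polar L T). split; [apply W_polar_in_branch | apply wexp_W_polar]; assumption. }
  destruct Hspec as [Hbr Hw]. apply (branch_root_eq_W_polar k); assumption.
Qed.

(** * Continuity of the solution *)

Definition polar_angle (L T : R) : R := snd (polar_root L T).

Lemma filterlim_angle_level_T {X} (F : (X -> Prop) -> Prop) {FF : Filter F} (Tf : X -> R) T0 b :
  0 < b < PI -> b < T0 -> filterlim Tf F (locally T0) ->
  filterlim (fun t => angle_level (Tf t) b) F (locally (angle_level T0 b)).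
Proof.
  intros Hb HbT HTf. assert (0 < sin b) by (apply sin_gt_0; lra).
  apply (filterlim_continuous F Tf (fun T => angle_level T b)); [exact HTf |].
  apply ex_derive_continuous_R. unfold angle_level. auto_derive.
  repeat split; try lra. apply Rdiv_lt_0_compat; lra.
Qed.

Lemma polar_angle_between L T bm bp : -1 < L -> 0 < bm -> bm < bp -> bp < PI -> bp < T ->
  angle_level T bp < L < angle_level T bm -> bm < polar_angle L T < bp.
Proof.
  intros HL Hbm Hbmp HbpPI HbpT HLev. unfold polar_angle.
  pose proof (polar_root_spec L T HL) as Hr. set (b := snd (polar_root L T)) in *.
  assert (Hb : 0 < b) by apply (proj1 (proj1 (root_angle_sign _ _ _ _ HL Hr) ltac:(lra))).
  destruct (root_angle_level _ _ _ _ HL Hr Hb) as [HbPI [HbT [_ Hlev]]].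
  pose proof (Rmin_l PI T). pose proof (Rmin_r PI T).
  assert (Hincr : forall u v, 0 < u -> u < v -> v < Rmin PI T ->
    - angle_level T u < - angle_level T v).
  { intros u v Hu Huv Hv.
    pose proof (angle_level_decreasing T u v Hu Huv ltac:(lra) ltac:(lra)). lra. }
  assert (Hmin : forall u, u < PI -> u < T -> u < Rmin PI T) by (intros; apply Rmin_glb_lt; lra).
  split.
  - apply (lt_of_increasing_on _ 0 (Rmin PI T) bm b Hincr);
      [split; [| apply Hmin] | split; [| apply Hmin] |]; lra.
  - apply (lt_of_increasing_on _ 0 (Rmin PI T) b bp Hincr);
      [split; [| apply Hmin] | split; [| apply Hmin] |]; lra.
Qed.

Lemma filterlim_polar_angle_pos {X} (F : (X -> Prop) -> Prop) {FF : Filter F}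
    (Lf Tf : X -> R) L0 T0 : -1 < L0 -> 0 < T0 ->
  filterlim Lf F (locally L0) -> filterlim Tf F (locally T0) ->
  filterlim (fun t => polar_angle (Lf t) (Tf t)) F (locally (polar_angle L0 T0)).
Proof.
  intros HL HT HLf HTf. apply (filterlim_of_Rabs_lt F). intros eps Heps. unfold polar_angle.
  pose proof (polar_root_spec L0 T0 HL) as Hr0.
  set (b0 := snd (polar_root L0 T0)) in *.
  assert (Hb0 : 0 < b0) by apply (proj1 (proj1 (root_angle_sign _ _ _ _ HL Hr0) HT)).
  destruct (root_angle_level _ _ _ _ HL Hr0 Hb0) as [Hb0PI [Hb0T [_ Hlev0]]].
  set (e := Rmin (Rmin eps b0) (Rmin (PI - b0) (T0 - b0)) / 2).
  assert (He : 0 < e /\ e < eps /\ e < b0 /\ e < PI - b0 /\ e < T0 - b0).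
  { pose proof (Rmin_l eps b0). pose proof (Rmin_r eps b0).
    pose proof (Rmin_l (PI - b0) (T0 - b0)). pose proof (Rmin_r (PI - b0) (T0 - b0)).
    pose proof (Rmin_l (Rmin eps b0) (Rmin (PI - b0) (T0 - b0))).
    pose proof (Rmin_r (Rmin eps b0) (Rmin (PI - b0) (T0 - b0))).
    assert (0 < Rmin (Rmin eps b0) (Rmin (PI - b0) (T0 - b0))) by (repeat apply Rmin_glb_lt; lra).
    unfold e. lra. }
  set (bm := b0 - e). set (bp := b0 + e).
  assert (Hbmp : 0 < bm /\ b0 - eps < bm < b0 /\ b0 < bp < b0 + eps /\ bp < PI /\ bp < T0)
    by (unfold bm, bp; lra).
  assert (Hm : L0 < angle_level T0 bm)
    by (rewrite <- Hlev0; apply angle_level_decreasing; lra).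
  assert (Hp : angle_level T0 bp < L0)
    by (rewrite <- Hlev0; apply angle_level_decreasing; lra).
  set (gap := Rmin (angle_level T0 bm - L0) (L0 - angle_level T0 bp)).
  assert (Hgap : 0 < gap /\ gap <= angle_level T0 bm - L0 /\ gap <= L0 - angle_level T0 bp)
    by (unfold gap; repeat split; [apply Rmin_glb_lt | apply Rmin_l | apply Rmin_r]; lra).
  pose proof (filterlim_Rabs_lt F Lf L0 (Rmin (gap / 2) (L0 + 1)) HLf
    ltac:(apply Rmin_glb_lt; lra)) as E1.
  pose proof (filterlim_Rabs_lt F Tf T0 (T0 - bp) HTf ltac:(lra)) as E2.
  pose proof (filterlim_Rabs_lt F _ _ (gap / 2)
    (filterlim_angle_level_T F Tf T0 bm ltac:(lra) ltac:(lra) HTf) ltac:(lra)) as E3.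
  pose proof (filterlim_Rabs_lt F _ _ (gap / 2)
    (filterlim_angle_level_T F Tf T0 bp ltac:(lra) ltac:(lra) HTf) ltac:(lra)) as E4.
  generalize (filter_and _ _ E1 (filter_and _ _ E2 (filter_and _ _ E3 E4))).
  apply filter_imp. intros t [HLt [HTt [Hbm Hbp]]].
  pose proof (Rmin_l (gap / 2) (L0 + 1)). pose proof (Rmin_r (gap / 2) (L0 + 1)).
  apply Rabs_def2 in HLt. apply Rabs_def2 in HTt. apply Rabs_def2 in Hbm. apply Rabs_def2 in Hbp.
  destruct (polar_angle_between (Lf t) (Tf t) bm bp) as [Hlo Hhi]; try lra.
  unfold polar_angle in Hlo, Hhi. apply Rabs_def1; lra.
Qed.

Lemma polar_angle_opp L T : -1 < L -> polar_angle L T = - polar_angle L (- T).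
Proof.
  intros HL. unfold polar_angle.
  pose proof (polar_root_spec L (- T) HL) as Hr.
  pose proof (root_angle_range _ _ _ _ HL Hr).
  pose proof (log_polar_root_opp _ _ _ _ Hr ltac:(apply Rlt_not_eq; lra)) as Hr'.
  rewrite Ropp_involutive in Hr'.
  exact (proj2 (log_polar_root_unique _ _ _ _ _ _ HL (polar_root_spec L T HL) Hr')).
Qed.

Lemma polar_angle_abs_le L T : -1 < L -> Rabs (polar_angle L T) <= Rabs T.
Proof.
  intros HL. destruct (root_angle_sign _ _ _ _ HL (polar_root_spec L T HL)) as [Hp [Hz Hn]].
  unfold polar_angle. destruct (Rtotal_order T 0) as [HT | [HT | HT]].
  - specialize (Hn HT). rewrite !Rabs_left by lra. lra.
  - rewrite (Hz HT), HT, Rabs_R0. lra.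
  - specialize (Hp HT). rewrite !Rabs_right by lra. lra.
Qed.

Lemma filterlim_polar_angle {X} (F : (X -> Prop) -> Prop) {FF : Filter F}
    (Lf Tf : X -> R) L0 T0 : -1 < L0 ->
  filterlim Lf F (locally L0) -> filterlim Tf F (locally T0) ->
  filterlim (fun t => polar_angle (Lf t) (Tf t)) F (locally (polar_angle L0 T0)).
Proof.
  intros HL HLf HTf. pose proof (filterlim_eventually_gt F Lf L0 (-1) HL HLf) as HLt.
  destruct (Rtotal_order T0 0) as [HT | [HT | HT]].
  - rewrite polar_angle_opp by exact HL.
    apply (filterlim_ext_loc (fun t => - polar_angle (Lf t) (- Tf t))).
    + apply (filter_imp _ _ (fun t Ht => eq_sym (polar_angle_opp _ _ Ht)) HLt).
    + apply (filterlim_Ropp F), (filterlim_polar_angle_pos F); try lra; [exact HLf |].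
      exact (filterlim_Ropp F _ _ HTf).
  - subst T0. unfold polar_angle at 2.
    rewrite (proj1 (proj2 (root_angle_sign _ _ _ _ HL (polar_root_spec L0 0 HL))) eq_refl).
    apply (filterlim_of_Rabs_lt F). intros eps Heps.
    pose proof (filterlim_Rabs_lt F Tf 0 eps HTf Heps) as HTe.
    generalize (filter_and _ _ HLt HTe). apply filter_imp. intros t [Ht HTt].
    pose proof (polar_angle_abs_le _ (Tf t) Ht). rewrite Rminus_0_r in *. lra.
  - exact (filterlim_polar_angle_pos F Lf Tf L0 T0 HL HT HLf HTf).
Qed.

Lemma W_polar_im L T : -1 < L -> Im (W_polar L T) = T - polar_angle L T.
Proof.
  intros HL. pose proof (polar_root_spec L T HL) as [_ [_ E]].
  unfold W_polar, polar_angle in *. destruct (polar_root L T) as [a b]. simpl in *. lra.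
Qed.

Lemma sin_polar_angle_neq0 L T : -1 < L -> T <> 0 -> sin (polar_angle L T) <> 0.
Proof.
  intros HL HT. pose proof (polar_root_spec L T HL) as Hr.
  pose proof (root_angle_range _ _ _ _ HL Hr).
  destruct (root_angle_sign _ _ _ _ HL Hr) as [Hp [_ Hn]]. unfold polar_angle.
  destruct (Rtotal_order T 0) as [HT' | [HT' | HT']]; [| contradiction |].
  - specialize (Hn HT'). apply Rlt_not_eq, sin_lt_0_var; lra.
  - specialize (Hp HT'). apply Rgt_not_eq, sin_gt_0; lra.
Qed.

Lemma W_polar_re L T : -1 < L -> T <> 0 ->
  Re (W_polar L T) = (T - polar_angle L T) * (cos (polar_angle L T) / sin (polar_angle L T)).
Proof.
  intros HL HT. pose proof (sin_polar_angle_neq0 L T HL HT) as Hs.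
  pose proof (polar_root_spec L T HL) as [_ [_ E]].
  unfold W_polar, polar_angle in *. destruct (polar_root L T) as [a b]. simpl in *.
  rewrite <- E. field. exact Hs.
Qed.

Lemma W_polar_re_mul_exp L T : -1 < L ->
  Re (W_polar L T) * exp (Re (W_polar L T)) = exp L * cos (polar_angle L T).
Proof.
  intros HL. pose proof (polar_root_spec L T HL) as [_ [E _]].
  unfold W_polar, polar_angle in *. destruct (polar_root L T) as [a b]. simpl in *.
  rewrite <- E, exp_plus. ring.
Qed.

Section WPolarContinuity.

Context {X : Type} (F : (X -> Prop) -> Prop) {FF : Filter F} (Lf Tf : X -> R) (L0 T0 : R).
Hypotheses (HL : -1 < L0) (HLf : filterlim Lf F (locally L0)) (HTf : filterlim Tf F (locally T0)).

Let HLt : F (fun t => -1 < Lf t) := filterlim_eventually_gt F Lf L0 (-1) HL HLf.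

Lemma filterlim_W_polar_re_neq0 : T0 <> 0 ->
  filterlim (fun t => Re (W_polar (Lf t) (Tf t))) F (locally (Re (W_polar L0 T0))).
Proof.
  intros HT. set (b := fun t => polar_angle (Lf t) (Tf t)).
  pose proof (filterlim_polar_angle F Lf Tf L0 T0 HL HLf HTf) as Hb. fold b in Hb.
  assert (HTt : F (fun t => Tf t <> 0)).
  { apply (filter_imp (fun t => Rabs (Tf t - T0) < Rabs T0)).
    - intros t Ht Hz. rewrite Hz, Rminus_0_l, Rabs_Ropp in Ht. lra.
    - apply (filterlim_Rabs_lt F); [exact HTf | apply Rabs_pos_lt, HT]. }
  apply (filterlim_ext_loc (fun t => (Tf t + - b t) * (cos (b t) / sin (b t)))).
  - generalize (filter_and _ _ HLt HTt). apply filter_imp.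
    intros t [Ht HT']. symmetry. apply W_polar_re; assumption.
  - rewrite W_polar_re by assumption.
    apply (filterlim_Rmult F).
    { apply (filterlim_Rplus F); [exact HTf | apply (filterlim_Ropp F), Hb]. }
    apply (filterlim_continuous F b (fun u => cos u / sin u)); [exact Hb |].
    apply ex_derive_continuous_R. auto_derive. apply sin_polar_angle_neq0; assumption.
Qed.

(* For [T0 = 0] the root is real and positive, and [x e^x = e^L cos b] traps [x]. *)
Lemma filterlim_W_polar_re_0 : T0 = 0 ->
  filterlim (fun t => Re (W_polar (Lf t) (Tf t))) F (locally (Re (W_polar L0 T0))).
Proof.
  intros HT0. subst T0. pose proof PI_RGT_0.
  assert (Hb0 : polar_angle L0 0 = 0)
    by exact (proj1 (proj2 (root_angle_sign _ _ _ _ HL (polar_root_spec L0 0 HL))) eq_refl).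
  pose proof (filterlim_polar_angle F Lf Tf L0 0 HL HLf HTf) as Hb. rewrite Hb0 in Hb.
  set (x0 := Re (W_polar L0 0)).
  assert (Hx0 : x0 * exp x0 = exp L0)
    by (unfold x0; rewrite W_polar_re_mul_exp, Hb0, cos_0 by exact HL; ring).
  assert (Hx0pos : 0 < x0) by (pose proof (exp_pos L0); pose proof (exp_pos x0); nra).
  apply (filterlim_of_Rabs_lt F). intros eps Heps.
  set (e := Rmin eps x0 / 2).
  assert (He : 0 < e < eps /\ e < x0).
  { pose proof (Rmin_l eps x0). pose proof (Rmin_r eps x0).
    assert (0 < Rmin eps x0) by (apply Rmin_glb_lt; lra). unfold e. lra. }
  pose proof (mul_exp_lt_compat (x0 - e) x0 ltac:(lra) ltac:(lra)).
  pose proof (mul_exp_lt_compat x0 (x0 + e) ltac:(lra) ltac:(lra)).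
  set (gap := Rmin (x0 * exp x0 - (x0 - e) * exp (x0 - e)) ((x0 + e) * exp (x0 + e) - x0 * exp x0)).
  assert (Hgap : 0 < gap /\ gap <= x0 * exp x0 - (x0 - e) * exp (x0 - e) /\
                 gap <= (x0 + e) * exp (x0 + e) - x0 * exp x0)
    by (unfold gap; repeat split; [apply Rmin_glb_lt | apply Rmin_l | apply Rmin_r]; lra).
  assert (Hlim : filterlim (fun t => exp (Lf t) * cos (polar_angle (Lf t) (Tf t))) F
                   (locally (exp L0 * cos 0))).
  { apply (filterlim_Rmult F).
    - apply (filterlim_continuous F Lf exp); [exact HLf |].
      apply ex_derive_continuous_R. auto_derive. exact I.
    - apply (filterlim_continuous F _ cos); [exact Hb |].
      apply ex_derive_continuous_R. auto_derive. exact I. }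
  rewrite cos_0, Rmult_1_r in Hlim.
  pose proof (filterlim_Rabs_lt F _ _ gap Hlim (proj1 Hgap)) as E1.
  pose proof (filterlim_Rabs_lt F _ _ (PI / 2) Hb ltac:(lra)) as E2.
  generalize (filter_and _ _ HLt (filter_and _ _ E1 E2)). apply filter_imp.
  intros t [HLt' [Ht1 Ht2]]. apply Rabs_def2 in Ht1.
  rewrite Rminus_0_r in Ht2. apply Rabs_def2 in Ht2.
  pose proof (W_polar_re_mul_exp (Lf t) (Tf t) HLt') as Hxt.
  set (x := Re (W_polar (Lf t) (Tf t))) in *.
  assert (0 < cos (polar_angle (Lf t) (Tf t))) by (apply cos_gt_0; lra).
  assert (Hx : 0 < x) by (pose proof (exp_pos (Lf t)); pose proof (exp_pos x); nra).
  pose proof (mul_exp_between x x0 e Hx ltac:(lra) ltac:(lra)). lra.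
Qed.

Lemma W_polar_continuous eps : 0 < eps ->
  F (fun t => Cmod (Cminus (W_polar (Lf t) (Tf t)) (W_polar L0 T0)) < eps).
Proof.
  intros Heps.
  assert (Hre : filterlim (fun t => Re (W_polar (Lf t) (Tf t))) F (locally (Re (W_polar L0 T0))))
    by (destruct (Req_dec T0 0); [apply filterlim_W_polar_re_0 | apply filterlim_W_polar_re_neq0];
        assumption).
  assert (Him : filterlim (fun t => Im (W_polar (Lf t) (Tf t))) F (locally (Im (W_polar L0 T0)))).
  { apply (filterlim_ext_loc (fun t => Tf t + - polar_angle (Lf t) (Tf t))).
    - apply (filter_imp _ _ (fun t Ht => eq_sym (W_polar_im _ _ Ht)) HLt).
    - rewrite W_polar_im by exact HL.
      apply (filterlim_Rplus F); [exact HTf |].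
      apply (filterlim_Ropp F), (filterlim_polar_angle F); assumption. }
  pose proof (filterlim_Rabs_lt F _ _ (eps / 2) Hre ltac:(lra)) as E1.
  pose proof (filterlim_Rabs_lt F _ _ (eps / 2) Him ltac:(lra)) as E2.
  generalize (filter_and _ _ E1 E2). apply filter_imp. intros t.
  destruct (W_polar (Lf t) (Tf t)) as [p q], (W_polar L0 T0) as [p0 q0].
  unfold Re, Im; simpl. intros [H1 H2].
  eapply Rle_lt_trans; [apply Cmod_le_Rabs_sum |]. simpl. unfold Rminus in *. lra.
Qed.

End WPolarContinuity.

(** * Differentiability of W_k *)

(* Half-angle formula for the principal argument, shifted into the window of branch [k]. *)
Definition arg_branch (k : Z) (z : C) : R :=
  2 * atan (Im z / (Cmod z + Re z)) + 2 * IZR k * PI.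

Lemma arg_branch_spec k z : 0 < Cmod z + Re z ->
  z = (Cmod z * cos (arg_branch k z), Cmod z * sin (arg_branch k z)) /\
  (2 * IZR k - 1) * PI < arg_branch k z < (2 * IZR k + 1) * PI.
Proof.
  intros Hz. destruct z as [p q]. unfold arg_branch, Re, Im in *. simpl fst in *; simpl snd in *.
  set (m := Cmod (p, q)) in *.
  assert (Hm2 : m ^ 2 = p ^ 2 + q ^ 2) by apply Cmod2_alt.
  assert (Hp : Rabs p <= m) by apply (Cmod_ge_Rabs_re (p, q)).
  assert (Hm : 0 < m) by (apply Rabs_le_between in Hp; lra).
  set (u := q / (m + p)).
  pose proof (atan_bound u). split; [| lra].
  rewrite cos_period_Z, sin_period_Z, cos_2a_cos, sin_2a, cos_atan, sin_atan.
  assert (Hsq : sqrt (1 + u²) * sqrt (1 + u²) = 1 + u ^ 2)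
    by (rewrite sqrt_sqrt; unfold Rsqr; [ring | nra]).
  assert (0 < sqrt (1 + u²)) by (apply sqrt_lt_R0; unfold Rsqr; nra).
  assert (Hu : 1 + u ^ 2 = 2 * m / (m + p)).
  { unfold u. field_simplify_eq; lra. }
  f_equal.
  - replace (m * (2 * (1 / sqrt (1 + u²)) * (1 / sqrt (1 + u²)) - 1))
      with (m * (2 / (sqrt (1 + u²) * sqrt (1 + u²)) - 1)) by (field; lra).
    rewrite Hsq, Hu. field. split; lra.
  - replace (m * (2 * (u / sqrt (1 + u²)) * (1 / sqrt (1 + u²))))
      with (m * (2 * u / (sqrt (1 + u²) * sqrt (1 + u²)))) by (field; lra).
    rewrite Hsq, Hu. unfold u. field. lra.
Qed.

Lemma LambertW_noncut k z : 0 < Cmod z + Re z -> exp (-1) < Cmod z ->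
  LambertW k z = W_polar (ln (Cmod z)) (arg_branch k z).
Proof.
  intros Hz Hm. destruct (arg_branch_spec k z Hz) as [Ez HT].
  rewrite Ez at 1. rewrite <- (exp_ln (Cmod z)) at 1 2 by (pose proof (exp_pos (-1)); lra).
  apply LambertW_polar; [apply ln_gt_m1; exact Hm | lra].
Qed.

Lemma negative_real_polar k p : p < 0 ->
  (p, 0) = (exp (ln (- p)) * cos ((2 * IZR k + 1) * PI),
            exp (ln (- p)) * sin ((2 * IZR k + 1) * PI)).
Proof.
  intros Hp. replace ((2 * IZR k + 1) * PI) with (PI + 2 * IZR k * PI) by ring.
  rewrite cos_period_Z, sin_period_Z, cos_PI, sin_PI, exp_ln by lra. f_equal; ring.
Qed.

Lemma LambertW_cut k p : p < - exp (-1) ->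
  LambertW k (p, 0) = W_polar (ln (- p)) ((2 * IZR k + 1) * PI).
Proof.
  intros Hp. pose proof (exp_pos (-1)). pose proof PI_RGT_0.
  rewrite (negative_real_polar k p) at 1 by lra.
  apply LambertW_polar; [apply ln_gt_m1; lra | lra].
Qed.

Lemma LambertW_repr k z : 1 <= Cmod z -> exists L T, -1 < L /\ exp L = Cmod z /\
  (2 * IZR k - 1) * PI < T <= (2 * IZR k + 1) * PI /\ LambertW k z = W_polar L T.
Proof.
  intros Hz. assert (exp (-1) < 1) by (rewrite <- exp_0; apply exp_increasing; lra).
  destruct (Rlt_or_le 0 (Cmod z + Re z)) as [Hp | Hp].
  - destruct (arg_branch_spec k z Hp) as [_ HT].
    exists (ln (Cmod z)), (arg_branch k z). repeat split; try lra.
    + apply ln_gt_m1. lra.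
    + apply exp_ln. lra.
    + apply LambertW_noncut; lra.
  - destruct z as [p q]. destruct (Cmod_add_re_nonpos p q Hp) as [-> Hpm].
    exists (ln (- p)), ((2 * IZR k + 1) * PI). pose proof PI_RGT_0.
    repeat split; try lra.
    + apply ln_gt_m1. lra.
    + rewrite exp_ln; lra.
    + apply LambertW_cut. lra.
Qed.

(* Derivatives over [C_AbsRing] use the [Cmod]-balls of [AbsRing_UniformSpace C_AbsRing],
   not Coquelicot's canonical (product) uniform structure on [C]. *)
Notation locally_C z0 := (@locally (AbsRing_UniformSpace C_AbsRing) z0).

Lemma locally_C_ball (z0 : C) d : 0 < d -> locally_C z0 (fun z => Cmod (Cminus z z0) < d).
Proof. intros Hd. exists (mkposreal d Hd). intros z Hz. exact Hz. Qed.

Lemma locally_C_elim (z0 : C) (P : C -> Prop) :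
  locally_C z0 P -> exists d, 0 < d /\ forall z, Cmod (Cminus z z0) < d -> P z.
Proof. intros [[d Hd] H]. exists d. split; [exact Hd | exact H]. Qed.

Lemma filterlim_C_component (z0 : C) (f : C -> R) :
  (forall z, Rabs (f z - f z0) <= Cmod (Cminus z z0)) ->
  filterlim f (locally_C z0) (locally (f z0)).
Proof.
  intros Hf. apply (filterlim_of_Rabs_lt (locally_C z0)). intros eps Heps.
  apply (filter_imp _ _ (fun z Hz => Rle_lt_trans _ _ _ (Hf z) Hz) (locally_C_ball z0 eps Heps)).
Qed.

Lemma filterlim_Re (z0 : C) : filterlim Re (locally_C z0) (locally (Re z0)).
Proof.
  apply filterlim_C_component. intros z.
  replace (Re z - Re z0) with (Re (Cminus z z0)) by (unfold Re, Cminus, Cplus, Copp; simpl; ring).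
  apply Cmod_ge_Rabs_re.
Qed.

Lemma filterlim_Im (z0 : C) : filterlim Im (locally_C z0) (locally (Im z0)).
Proof.
  apply filterlim_C_component. intros z.
  replace (Im z - Im z0) with (Im (Cminus z z0)) by (unfold Im, Cminus, Cplus, Copp; simpl; ring).
  apply Cmod_ge_Rabs_im.
Qed.

Lemma filterlim_Cmod (z0 : C) : filterlim Cmod (locally_C z0) (locally (Cmod z0)).
Proof.
  apply filterlim_C_component. intros z. apply Rabs_le_between. split.
  - pose proof (Cmod_triangle (Copp (Cminus z z0)) z) as H.
    replace (Cplus (Copp (Cminus z z0)) z) with z0 in H by ring. rewrite Cmod_opp in H. lra.
  - pose proof (Cmod_triangle (Cminus z z0) z0) as H.
    replace (Cplus (Cminus z z0) z0) with z in H by ring. lra.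
Qed.

Lemma W_polar_local_inverse {X} (F : (X -> Prop) -> Prop) {FF : Filter F}
    (Lf Tf : X -> R) L0 T0 (g phi : X -> C) :
  -1 < L0 -> filterlim Lf F (locally L0) -> filterlim Tf F (locally T0) ->
  F (fun x => g x = W_polar (Lf x) (Tf x)) ->
  F (fun x => phi x = (exp (Lf x) * cos (Tf x), exp (Lf x) * sin (Tf x))) ->
  Cplus 1 (W_polar L0 T0) <> RtoC 0 ->
  forall eps, 0 < eps -> F (fun x =>
    Cmod (Cminus (Cminus (g x) (W_polar L0 T0))
                 (Cdiv (Cminus (phi x) (wexp (W_polar L0 T0)))
                       (Cmult (cexp (W_polar L0 T0)) (Cplus 1 (W_polar L0 T0)))))
      <= eps * Cmod (Cminus (phi x) (wexp (W_polar L0 T0)))).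
Proof.
  intros HL HLf HTf Hg Hphi H1.
  apply (inverse_derivative_estimate F wexp);
    [apply is_derive_wexp | apply cexp_mul_succ_neq0, H1 | |].
  - intros eps Heps.
    generalize (filter_and _ _ Hg (W_polar_continuous F Lf Tf L0 T0 HL HLf HTf eps Heps)).
    apply filter_imp. intros x [-> H]. exact H.
  - pose proof (filterlim_eventually_gt F Lf L0 (-1) HL HLf) as HLt.
    generalize (filter_and _ _ HLt (filter_and _ _ Hg Hphi)).
    apply filter_imp. intros x [HLx [-> ->]]. apply wexp_W_polar, HLx.
Qed.

Lemma is_derive_LambertW_noncut k z0 : 0 < Cmod z0 + Re z0 -> exp (-1) < Cmod z0 ->
  Cplus 1 (LambertW k z0) <> RtoC 0 ->
  is_derive (LambertW k) z0 (Cinv (Cmult (cexp (LambertW k z0)) (Cplus 1 (LambertW k z0)))).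
Proof.
  intros Hz0 Hm0 H1. set (F := locally_C z0).
  set (Lf z := ln (Cmod z)). set (Tf := arg_branch k).
  assert (HLf : filterlim Lf F (locally (Lf z0))).
  { apply (filterlim_continuous F Cmod ln); [apply filterlim_Cmod |].
    apply continuous_ln. pose proof (exp_pos (-1)). lra. }
  assert (HTf : filterlim Tf F (locally (Tf z0))).
  { apply (filterlim_continuous F (fun z => Im z * / (Cmod z + Re z))
             (fun v => 2 * atan v + 2 * IZR k * PI)).
    - apply (filterlim_Rmult F); [apply filterlim_Im |].
      apply (filterlim_continuous F _ Rinv).
      { apply (filterlim_Rplus F); [apply filterlim_Cmod | apply filterlim_Re]. }
      apply ex_derive_continuous_R. auto_derive. lra.
    - apply ex_derive_continuous_R. auto_derive. exact I. }
  assert (Hnear : F (fun z => 0 < Cmod z + Re z /\ exp (-1) < Cmod z)).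
  { pose proof (filterlim_Rplus F _ _ _ _ (filterlim_Cmod z0) (filterlim_Re z0)) as Hsum.
    pose proof (filterlim_Rabs_lt F _ _ _ Hsum Hz0) as E1.
    pose proof (filterlim_Rabs_lt F _ _ (Cmod z0 - exp (-1)) (filterlim_Cmod z0) ltac:(lra)) as E2.
    generalize (filter_and _ _ E1 E2). apply filter_imp. intros z [A B].
    apply Rabs_def2 in A. apply Rabs_def2 in B. lra. }
  assert (Hrepr : F (fun z => LambertW k z = W_polar (Lf z) (Tf z)))
    by (apply (filter_imp _ _ (fun z Hz => LambertW_noncut k z (proj1 Hz) (proj2 Hz)) Hnear)).
  assert (Hpolar : forall z, 0 < Cmod z + Re z -> exp (-1) < Cmod z ->
            z = (exp (Lf z) * cos (Tf z), exp (Lf z) * sin (Tf z))).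
  { intros z Hz Hm. unfold Lf, Tf. rewrite exp_ln by (pose proof (exp_pos (-1)); lra).
    apply arg_branch_spec, Hz. }
  assert (HL : -1 < Lf z0) by (apply ln_gt_m1, Hm0).
  rewrite (LambertW_noncut k z0 Hz0 Hm0) in *. fold (Lf z0) (Tf z0) in *.
  pose proof (W_polar_local_inverse F Lf Tf (Lf z0) (Tf z0) (LambertW k) (fun z => z) HL HLf HTf
    Hrepr (filter_imp _ _ (fun z Hz => Hpolar z (proj1 Hz) (proj2 Hz)) Hnear) H1) as Hest.
  rewrite wexp_W_polar, <- (Hpolar z0 Hz0 Hm0) in Hest by exact HL.
  apply is_derive_C_of. intros eps Heps.
  destruct (locally_C_elim _ _ (Hest eps Heps)) as [d [Hd Hball]].
  exists d. split; [exact Hd |]. intros z Hz.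
  rewrite (LambertW_noncut k z0 Hz0 Hm0), Cmult_comm. exact (Hball z Hz).
Qed.

Lemma is_derive_LambertW_cut k p : p < - exp (-1) -> Cplus 1 (LambertW k (p, 0)) <> RtoC 0 ->
  is_derive (fun h : R => LambertW k (Cplus (p, 0) (RtoC h))) 0
    (Cinv (Cmult (cexp (LambertW k (p, 0))) (Cplus 1 (LambertW k (p, 0))))).
Proof.
  intros Hp H1. set (F := @locally R_UniformSpace 0).
  set (Lf h := ln (- (p + h))). set (T := (2 * IZR k + 1) * PI).
  assert (Ep : forall h, Cplus (p, 0) (RtoC h) = (p + h, 0))
    by (intros h; unfold Cplus, RtoC; simpl; f_equal; ring).
  assert (HLf : filterlim Lf F (locally (Lf 0))).
  { apply ex_derive_continuous_R. unfold Lf. auto_derive. pose proof (exp_pos (-1)). lra. }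
  assert (Hnear : F (fun h => p + h < - exp (-1))).
  { exists (mkposreal (- exp (-1) - p) ltac:(simpl; lra)). intros h Hh.
    change (Rabs (h - 0) < - exp (-1) - p) in Hh. apply Rabs_def2 in Hh. lra. }
  assert (HL : -1 < Lf 0) by (apply ln_gt_m1; lra).
  assert (EW : LambertW k (p, 0) = W_polar (Lf 0) T)
    by (unfold Lf; rewrite Rplus_0_r; apply LambertW_cut, Hp).
  rewrite EW in *.
  pose proof (W_polar_local_inverse F Lf (fun _ => T) (Lf 0) T
    (fun h => LambertW k (Cplus (p, 0) (RtoC h))) (fun h => Cplus (p, 0) (RtoC h))
    HL HLf (filterlim_const T)) as Hest.
  assert (Hrepr : F (fun h => LambertW k (Cplus (p, 0) (RtoC h)) = W_polar (Lf h) T)).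
  { apply filter_imp with (2 := Hnear). intros h Hh. rewrite Ep. apply LambertW_cut, Hh. }
  assert (Hphi : F (fun h => Cplus (p, 0) (RtoC h) = (exp (Lf h) * cos T, exp (Lf h) * sin T))).
  { apply filter_imp with (2 := Hnear). intros h Hh. rewrite Ep. apply negative_real_polar.
    pose proof (exp_pos (-1)). lra. }
  specialize (Hest Hrepr Hphi H1).
  assert (Hw0 : wexp (W_polar (Lf 0) T) = (p, 0)).
  { rewrite wexp_W_polar by exact HL. unfold Lf, T. rewrite Rplus_0_r.
    symmetry. apply negative_real_polar. pose proof (exp_pos (-1)). lra. }
  rewrite Hw0 in Hest.
  apply is_derive_RC_of. intros eps Heps. destruct (Hest eps Heps) as [[d Hd] Hball].
  exists d. split; [exact Hd |]. intros h Hh. specialize (Hball h Hh). simpl in Hball.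
  replace (Cminus (Cplus (p, 0) (RtoC h)) (p, 0)) with (RtoC (h - 0)) in Hball
    by (unfold Cminus, Cplus, Copp, RtoC; simpl; f_equal; ring).
  rewrite Cmod_R in Hball. rewrite (Ep 0), Rplus_0_r, EW. exact Hball.
Qed.

(** * The bound *)

Lemma Cmod_mul_exp_lt x y Y : / 2 < Y -> Rabs y <= Y -> x < - / 2 ->
  Cmod (x, y) * exp x < (/ 2 + Y) * exp (- / 2).
Proof.
  intros HY Hy Hx. set (t := - x - / 2). assert (Ht : 0 < t) by (unfold t; lra).
  pose proof (Cmod_le_Rabs_sum (x, y)) as Hm. simpl in Hm. rewrite Rabs_left in Hm by lra.
  assert (Ex : exp x = exp (- / 2) * exp (- t)) by (rewrite <- exp_plus; f_equal; unfold t; ring).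
  assert (Et : exp t * exp (- t) = 1) by (rewrite <- exp_plus, Rplus_opp_r; apply exp_0).
  pose proof (exp_ineq1_le t). pose proof (exp_pos (- t)). pose proof (exp_pos (- / 2)).
  assert (Hkey : (- x + Y) * exp (- t) < / 2 + Y).
  { replace (- x + Y) with (/ 2 + Y + t) by (unfold t; ring).
    assert (Hlin : / 2 + Y + t < (/ 2 + Y) * exp t) by nra.
    apply (Rmult_lt_compat_r (exp (- t))) in Hlin; [| lra].
    rewrite Rmult_assoc, Et, Rmult_1_r in Hlin. exact Hlin. }
  rewrite Ex. apply Rle_lt_trans with ((- x + Y) * (exp (- / 2) * exp (- t))).
  - apply Rmult_le_compat_r; [nra | lra].
  - replace ((- x + Y) * (exp (- / 2) * exp (- t))) with ((- x + Y) * exp (- t) * exp (- / 2))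
      by ring.
    apply Rmult_lt_compat_r; lra.
Qed.

Lemma W_polar_deriv_bound L T Y : -1 < L -> / 2 < Y -> Rabs T <= Y ->
  (/ 2 + Y) * exp (- / 2) <= exp L ->
  - / 2 <= Re (W_polar L T) /\
  Cmod (Cinv (Cmult (cexp (W_polar L T)) (Cplus 1 (W_polar L T)))) <= / exp L.
Proof.
  intros HL HY HT Hc.
  pose proof (W_polar_im_abs L T HL) as Hy. pose proof (Cmod_W_polar L T HL) as Hm.
  destruct (W_polar L T) as [x y]. unfold Re, Im in *. simpl in *.
  assert (Hx : - / 2 <= x).
  { apply Rnot_lt_le. intros Hx. pose proof (Cmod_mul_exp_lt x y Y HY ltac:(lra) Hx). lra. }
  split; [exact Hx |].
  assert (H1 : Cplus 1 (x, y) <> RtoC 0) by (intros E; injection E as E1 _; simpl in E1; lra).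
  rewrite Cmod_inv by (apply cexp_mul_succ_neq0, H1).
  rewrite Cmod_mult, Cmod_cexp. unfold Re; simpl fst.
  assert (Hmod : Cmod (x, y) <= Cmod (Cplus 1 (x, y))).
  { unfold Cmod, Cplus; simpl fst; simpl snd. apply sqrt_le_1_alt. nra. }
  assert (0 < Cmod (x, y)).
  { pose proof (Cmod_ge_0 (x, y)). pose proof (exp_pos x). pose proof (exp_pos L). nra. }
  rewrite <- Hm. apply Rinv_le_contravar; [apply Rmult_lt_0_compat; [lra | apply exp_pos] |].
  rewrite Rmult_comm. apply Rmult_le_compat_l; [apply Rlt_le, exp_pos | exact Hmod].
Qed.

Lemma PI_lt_16_5 : PI < 16 / 5.
Proof.
  apply Rnot_le_lt. intros H. pose proof PI_RGT_0.
  assert (0 <= cos (8 / 5)) by (apply cos_ge_0; lra).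
  destruct (pre_cos_bound (8 / 5) 0 ltac:(lra) ltac:(lra)) as [_ Hub].
  unfold cos_approx, cos_term in Hub. simpl in Hub. lra.
Qed.

Lemma exp_mhalf_bounds : / 2 <= exp (- / 2) <= 8 / 13.
Proof.
  assert (Hlo : 13 / 8 <= exp (/ 2))
    by (pose proof (exp_ge_taylor (/ 2) 2 ltac:(lra)) as H; simpl in H; lra).
  assert (Hhi : exp (/ 2) <= 2).
  { assert (E : exp (/ 2) * exp (/ 2) = exp 1) by (rewrite <- exp_plus; f_equal; field).
    pose proof exp_le_3. pose proof (exp_pos (/ 2)). nra. }
  rewrite exp_Ropp. split; [| replace (8 / 13) with (/ (13 / 8)) by field];
    apply Rinv_le_contravar; lra.
Qed.

Lemma threshold_ge_1 K : 0 <= K -> 1 <= (/ 2 + (2 * K + 1) * PI) * exp (- / 2).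
Proof.
  intros HK. pose proof exp_mhalf_bounds. pose proof PI2_3_2.
  assert (3 <= (2 * K + 1) * PI) by nra.
  apply Rle_trans with ((/ 2 + 3) * / 2); [lra |]. apply Rmult_le_compat; lra.
Qed.

Lemma threshold_le_linear K : 0 <= K -> (/ 2 + (2 * K + 1) * PI) * exp (- / 2) <= 4 * (K + 1).
Proof.
  intros HK. pose proof exp_mhalf_bounds. pose proof PI_lt_16_5. pose proof PI_RGT_0.
  apply Rle_trans with ((/ 2 + (2 * K + 1) * (16 / 5)) * (8 / 13)); [| lra].
  apply Rmult_le_compat; nra.
Qed.

Lemma window_abs_le k T : (2 * IZR k - 1) * PI < T <= (2 * IZR k + 1) * PI ->
  Rabs T <= (2 * IZR (Z.abs k) + 1) * PI.
Proof.
  intros HT. pose proof PI_RGT_0. apply Rabs_le. destruct (Z_le_gt_dec 0 k).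
  - rewrite Z.abs_eq by lia. assert (0 <= IZR k) by (apply IZR_le; lia). nra.
  - rewrite Z.abs_neq, opp_IZR by lia. assert (IZR k <= -1) by (apply IZR_le; lia). nra.
Qed.

Lemma lw_deriv_LambertW k z : 1 <= Cmod z -> Cplus 1 (LambertW k z) <> RtoC 0 ->
  lw_deriv k z (Cinv (Cmult (cexp (LambertW k z)) (Cplus 1 (LambertW k z)))).
Proof.
  intros Hz H1. assert (exp (-1) < 1) by (rewrite <- exp_0; apply exp_increasing; lra).
  unfold lw_deriv. destruct (excluded_middle_informative (lw_on_cut k z)) as [[Him Hre] | Hcut];
    destruct z as [p q].
  - unfold Re, Im in Him, Hre. simpl in Him, Hre. subst q.
    change (p, 0) with (RtoC p) in Hz. rewrite Cmod_R in Hz.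
    assert (p <= 0) by (destruct (k =? 0)%Z; pose proof (exp_pos (-1)); lra).
    apply is_derive_LambertW_cut; [| exact H1]. rewrite Rabs_left1 in Hz; lra.
  - apply is_derive_LambertW_noncut; [unfold Re; simpl | lra | exact H1].
    apply Rnot_le_lt. intros Hp. apply Hcut.
    destruct (Cmod_add_re_nonpos p q Hp) as [Hq Hpm].
    unfold lw_on_cut, Re, Im; simpl. split; [exact Hq |]. destruct (k =? 0)%Z; lra.
Qed.

Theorem theorem5 :
  forall (k : Z) (z : C),
    ((/ 2 + (2 * IZR (Z.abs k) + 1) * PI) * exp (- / 2) <= Cmod z ->
     exists d : C, lw_deriv k z d /\ Cmod d <= / Cmod z) /\
    (4 * (IZR (Z.abs k) + 1) <= Cmod z ->
     (/ 2 + (2 * IZR (Z.abs k) + 1) * PI) * exp (- / 2) <= Cmod z).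
Proof.
  intros k z. assert (HK : 0 <= IZR (Z.abs k)) by (apply IZR_le; lia).
  split; [| intros Hz; eapply Rle_trans; [apply threshold_le_linear, HK | exact Hz]].
  intros Hz. set (Y := (2 * IZR (Z.abs k) + 1) * PI) in *.
  assert (Hz1 : 1 <= Cmod z) by (eapply Rle_trans; [apply threshold_ge_1, HK | exact Hz]).
  destruct (LambertW_repr k z Hz1) as [L [T [HL [HeL [HT HW]]]]].
  rewrite <- HeL in Hz.
  assert (HY : / 2 < Y) by (unfold Y; pose proof PI2_3_2; nra).
  destruct (W_polar_deriv_bound L T Y HL HY (window_abs_le k T HT) Hz) as [Hre Hd].
  rewrite <- HW, HeL in *.
  exists (Cinv (Cmult (cexp (LambertW k z)) (Cplus 1 (LambertW k z)))).
  split; [| exact Hd].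
  apply lw_deriv_LambertW; [exact Hz1 |].
  intros E. apply (f_equal Re) in E. unfold Re in *. simpl in E. lra.
Qed.
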